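(* Let $M$, $\alpha,\beta,\gamma$ satisfy the standing assumptions described in the context, let $T>0$ and $b$ be as fixed in the context, let $N>0$, and for $\xi\in\mathbb{R}^n$ let $W(t,\xi)\in\mathbb{C}^2$ be any solution on $[T,\infty)$ of $$\partial_t W=\begin{pmatrix}-2b(t)& i|\xi|\\ i|\xi|&0\end{pmatrix}W .$$ Then there exists a positive constant $K_2$ such that, for all $(t,\xi)\in Z_\Psi$ with $\xi\ne0$: if $\alpha>0$, then $K_2^{-1}|W(T,\xi)|\le|W(t,\xi)|\le K_2|W(T,\xi)|$; if $\alpha\le0$, then $K_2^{-1}|W(t_\xi,\xi)|\le|W(t,\xi)|\le K_2|W(t_\xi,\xi)|$.
   Context: Standing assumptions: $M:[0,\infty)\to\mathbb{R}$ continuous; $\alpha\le1$, $\beta<1$, $\gamma>0$ with $\gamma\ge\beta\ge(\alpha+1)/2$ if $\alpha\ne0$ and $\gamma\ge\beta>1/2$ if $\alpha=0$; $M$ satisfies: (M1) if $\alpha\ge 0$, $\int_0^t\big|\int_s^\infty\int_\sigma^\infty M(\tau)\,d\tau\,d\sigma\big|\,ds\lesssim(1+t)^{\alpha}$; if $\alpha\le 0$, $\int_t^\infty\big|\int_s^\infty\int_\sigma^\infty M(\tau)\,d\tau\,d\sigma\big|\,ds\lesssim(1+t)^{\alpha}$ (both when $\alpha=0$); (M2) $|M(t)|\lesssim(1+t)^{-2\beta}$; (M3) $\big|\int_t^\infty M\big|\lesssim(1+t)^{-\gamma}$, $\int_t^\infty\big(\int_s^\infty M\big)^2ds\lesssim(1+t)^{-\gamma}$,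 $\int_0^\infty\int_t^\infty\big(\int_s^\infty M\big)^2\,ds\,dt<\infty$; and $\sup_{t\ge0}(1+t)^\alpha\int_t^\infty\int_s^\infty(\int_\sigma^\infty M)^2\,d\sigma\,ds<\infty$; here $f\lesssim g$ means $f\le Cg$ with $C$ independent of $t$. Definition of $b$ and $T$: $q_1:=M$, $Q_k(t):=-\int_t^\infty q_k$, $q_k:=\sum_{j=1}^{k-1}Q_jQ_{k-j}$ ($k\ge2$), $\phi(t):=-\int_t^\infty Q_2$; $T>0$ is chosen so that $|\int_t^\infty Q_1(s)\,ds|\le1$ and $\phi(t)\le6^{-4}$ for all $t\ge T$, and $b(t):=\sum_{k\ge1}Q_k(t)$ on $[T,\infty)$. Zones: $Z_\Psi:=\{(t,\xi)\in[T,\infty)\times\mathbb{R}^n:(1+t)^\alpha|\xi|\le N\}$; for $\alpha\ne0$, $\xi\ne0$, $t_\xi:=\max\{T,(N|\xi|^{-1})^{1/\alpha}-1\}$, and for $\alpha=0$ set $t_\xi:=T$. *)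

From Stdlib Require Import Reals List.
From Coquelicot Require Import Coquelicot.
Open Scope R_scope.

Definition pinf : (R -> Prop) -> Prop := Rbar_locally p_infty.

(* improper integral  \int_t^\infty f  (total operator; meaningful when
   ex_RInt_gen f (at_point t) pinf holds) *)
Definition Iinf (f : R -> R) (t : R) : R := RInt_gen f (at_point t) pinf.

Definition pw (t a : R) : R := Rpower (1 + t) a.

(* [Q_1; ...; Q_k] :  q_1 = M, Q_k = - \int_t^\infty q_k,
   q_k = sum_{j=1}^{k-1} Q_j Q_{k-j}  (k >= 2) *)
Fixpoint Qlist (M : R -> R) (k : nat) : list (R -> R) :=
  match k with
  | O => nil
  | S O => (fun t => - Iinf M t) :: nil
  | S k' =>
      let l := Qlist M k' in
      l ++ ((fun t =>
               - Iinf (fun s =>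
                   fold_right Rplus 0
                     (map (fun j => nth (j - 1) l (fun _ => 0) s
                                    * nth (k' - j) l (fun _ => 0) s)
                          (seq 1 k'))) t) :: nil)
  end.

Definition Qk (M : R -> R) (k : nat) : R -> R :=
  nth (k - 1) (Qlist M k) (fun _ => 0).

Definition phi (M : R -> R) (t : R) : R := - Iinf (Qk M 2) t.

Definition bfun (M : R -> R) (t : R) : R := Series (fun k => Qk M (S k) t).

(* Euclidean norm of xi in R^n, with R^n represented by lists of length n *)
Definition enorm (xi : list R) : R :=
  sqrt (fold_right (fun x acc => x ^ 2 + acc) 0 xi).

Definition cnorm2 (w : Coquelicot.Complex.C * Coquelicot.Complex.C) : R :=
  sqrt (Cmod (fst w) ^ 2 + Cmod (snd w) ^ 2).

Definition t_xi (T N alpha : R) (xi : list R) : R :=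
  if Req_EM_T alpha 0 then T
  else Rmax T (Rpower (N / enorm xi) (1 / alpha) - 1).

(** With E = |W|^2 and p = |W_1|^2 the system gives E' = -4 b p.  The coefficient b is
    Q_1 + O(A), where A = \int_t^\infty Q_1^2 = -Q_2: the tail of the series of the Q_k is
    controlled by A through the majorant c_1 = 36, c_{k+1} = (2/6^4) \sum_j c_j c_{k+1-j},
    whose partial sums stay below 39.  The term -4 Q_1 p / E of (ln E)' is not integrable,
    but it is cancelled by the derivative of the bounded gauge 4 P p / E, P = \int_t^\infty Q_1,
    so G = ln E - 4 P p / E satisfies |G'| <= h = 24 A + 4 |P| |Q_1| + 4 |xi| |P|.  In the zone
    (1+t)^alpha |xi| <= N the integral of h is bounded: the first term by the choice of T, the
    others by (M1) and (M3), through an integration by parts against (1+t)^(-gamma) when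
    alpha > 0.  Hence |W| changes by a bounded factor on the zone. *)

From Stdlib Require Import Reals List Lra Lia Psatz FunctionalExtensionality.
From Coquelicot Require Import Coquelicot.
Open Scope R_scope.

Lemma continuousR_plus (f g : R -> R) x :
  continuous f x -> continuous g x -> continuous (fun y => f y + g y) x.
Proof. exact (@continuous_plus R_UniformSpace R_AbsRing R_NormedModule f g x). Qed.

Lemma continuousR_mult (f g : R -> R) x :
  continuous f x -> continuous g x -> continuous (fun y => f y * g y) x.
Proof. exact (@continuous_mult R_UniformSpace R_AbsRing f g x). Qed.

Lemma continuousR_scal c (f : R -> R) x :
  continuous f x -> continuous (fun y => c * f y) x.
Proof. exact (@continuous_scal_r R_UniformSpace R_AbsRing R_NormedModule c f x). Qed.

Lemma continuousR_opp (f : R -> R) x : continuous f x -> continuous (fun y => - f y) x.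
Proof. exact (@continuous_opp R_UniformSpace R_AbsRing R_NormedModule f x). Qed.

Lemma continuousR_const (c : R) x : continuous (fun _ : R => c) x.
Proof. exact (@continuous_const R_UniformSpace R_UniformSpace c x). Qed.

Lemma continuous_of_is_derive (f : R -> R) (x df : R) : is_derive f x df -> continuous f x.
Proof. intros H. apply (@ex_derive_continuous R_AbsRing R_NormedModule). eexists; eauto. Qed.

Lemma exp_le_mono x y : x <= y -> exp x <= exp y.
Proof. intros [H| ->]; [left; apply exp_increasing, H | lra]. Qed.

Lemma ball_R (l e z : R) : ball l e z <-> Rabs (z - l) < e.
Proof. split; intros H; exact H. Qed.

Lemma locally_pos x : 0 < x -> locally x (fun y => 0 < y).
Proof.
  intros Hx. exists (mkposreal x Hx). intros y Hy.
  apply (proj1 (ball_R _ _ _)), Rabs_lt_between in Hy. simpl in Hy. lra.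
Qed.

Lemma is_derive_eq (f : R -> R) (x l l' : R) : is_derive f x l -> l = l' -> is_derive f x l'.
Proof. intros H <-; exact H. Qed.

Lemma is_derive_Rplus (f g : R -> R) (x df dg : R) :
  is_derive f x df -> is_derive g x dg -> is_derive (fun y => f y + g y) x (df + dg).
Proof. exact (@is_derive_plus R_AbsRing R_NormedModule f g x df dg). Qed.

Lemma is_derive_Rminus (f g : R -> R) (x df dg : R) :
  is_derive f x df -> is_derive g x dg -> is_derive (fun y => f y - g y) x (df - dg).
Proof. exact (@is_derive_minus R_AbsRing R_NormedModule f g x df dg). Qed.

Lemma is_derive_Ropp (f : R -> R) (x df : R) : is_derive f x df -> is_derive (fun y => - f y) x (- df).
Proof. exact (@is_derive_opp R_AbsRing R_NormedModule f x df). Qed.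

Lemma is_derive_Rmult (f g : R -> R) (x df dg : R) :
  is_derive f x df -> is_derive g x dg -> is_derive (fun y => f y * g y) x (df * g x + f x * dg).
Proof. intros. apply (@is_derive_mult R_AbsRing f g x df dg); auto. intros; apply Rmult_comm. Qed.

Lemma is_derive_Rsqr (f : R -> R) (x df : R) :
  is_derive f x df -> is_derive (fun y => f y ^ 2) x (2 * f x * df).
Proof.
  intros H. apply (is_derive_ext (fun y => f y * f y)).
  - intros y. simpl. ring.
  - eapply is_derive_eq; [exact (is_derive_Rmult f f x df df H H) | ring].
Qed.

Lemma is_derive_Rdiv (f g : R -> R) (x df dg : R) :
  is_derive f x df -> is_derive g x dg -> g x <> 0 ->
  is_derive (fun y => f y / g y) x ((df * g x - f x * dg) / g x ^ 2).
Proof.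
  intros Hf Hg Hn. eapply is_derive_eq.
  - exact (is_derive_Rmult f (fun y => / g y) x _ _ Hf (is_derive_inv g x dg Hg Hn)).
  - cbv beta. field. exact Hn.
Qed.

Lemma is_derive_ln_comp (f : R -> R) (x df : R) :
  is_derive f x df -> 0 < f x -> is_derive (fun y => ln (f y)) x (df / f x).
Proof.
  intros H Hp. unfold Rdiv.
  exact (@is_derive_comp R_AbsRing R_NormedModule ln f x _ df (is_derive_ln _ Hp) H).
Qed.

Lemma is_derive_exp_comp (f : R -> R) (x df : R) :
  is_derive f x df -> is_derive (fun y => exp (f y)) x (df * exp (f x)).
Proof.
  intros H. exact (@is_derive_comp R_AbsRing R_NormedModule exp f x _ df (is_derive_exp _) H).
Qed.

Lemma is_derive_lin (c x : R) : is_derive (fun y => c * y) x c.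
Proof.
  eapply is_derive_eq; [apply is_derive_scal, (@is_derive_id R_AbsRing) | apply Rmult_1_r].
Qed.

Lemma derive_nonpos_le (f df : R -> R) u t : u <= t ->
  (forall y, u <= y <= t -> is_derive f y (df y)) ->
  (forall y, u <= y <= t -> df y <= 0) -> f t <= f u.
Proof.
  intros Hut Hd Hn. destruct (Req_dec u t) as [<-|Hne]; [lra|].
  destruct (MVT_gen f u t df) as [c [Hc E]]; rewrite ?Rmin_left, ?Rmax_right in * by lra.
  - intros y Hy. apply Hd. lra.
  - intros y Hy. apply continuity_pt_filterlim, (continuous_of_is_derive f y (df y)), Hd, Hy.
  - pose proof (Hn c Hc). nra.
Qed.

Lemma at_right_limit_bounds (f : R -> R) T t lo hi : T < t ->
  filterlim f (at_right T) (locally (f T)) ->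
  (forall u, T < u <= t -> lo <= f u <= hi) -> lo <= f T <= hi.
Proof.
  intros Ht Hf H.
  assert (Hev : at_right T (fun u => lo <= f u <= hi)).
  { exists (mkposreal (t - T) ltac:(lra)). intros u Hu HTu.
    apply (proj1 (ball_R _ _ _)), Rabs_lt_between in Hu. simpl in Hu. apply H. lra. }
  split.
  - apply (filterlim_le (F := at_right T) (fun _ => lo) f lo (f T)); [| apply filterlim_const | exact Hf].
    eapply filter_imp; [|exact Hev]. intros u []; auto.
  - apply (filterlim_le (F := at_right T) f (fun _ => hi) (f T) hi); [| exact Hf | apply filterlim_const].
    eapply filter_imp; [|exact Hev]. intros u []; auto.
Qed.

(** * Improper integrals on a half line *)

Definition continuous_pos (f : R -> R) := forall x, 0 < x -> continuous f x.

Lemma ex_RInt_continuous_pos f a b : continuous_pos f -> 0 < a -> 0 < b -> ex_RInt f a b.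
Proof.
  intros Hf Ha Hb. apply (@ex_RInt_continuous R_CompleteNormedModule).
  intros z [Hz _]. apply Hf. unfold Rmin in Hz. destruct (Rle_dec a b); lra.
Qed.

Lemma RInt_Chasles_R (f : R -> R) a b c :
  ex_RInt f a b -> ex_RInt f b c -> RInt f a b + RInt f b c = RInt f a c.
Proof. exact (@RInt_Chasles R_CompleteNormedModule f a b c). Qed.

Lemma RInt_scal_R (f : R -> R) a b k : ex_RInt f a b -> RInt (fun x => k * f x) a b = k * RInt f a b.
Proof. exact (@RInt_scal R_CompleteNormedModule f a b k). Qed.

Lemma RInt_plus_R (f g : R -> R) a b : ex_RInt f a b -> ex_RInt g a b ->
  RInt (fun x => f x + g x) a b = RInt f a b + RInt g a b.
Proof. exact (@RInt_plus R_CompleteNormedModule f g a b). Qed.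

Lemma is_derive_RInt_R (h : R -> R) lo y :
  locally y (fun z => ex_RInt h lo z) -> continuous h y ->
  is_derive (fun z => RInt h lo z) y (h y).
Proof.
  intros Hex Hc. apply (is_derive_RInt h (fun z => RInt h lo z) lo y); auto.
  eapply filter_imp; [|exact Hex]. intros z Hz. apply (@RInt_correct R_CompleteNormedModule), Hz.
Qed.

Lemma filter_prod_at_point_pinf (a c : R) (P : R * R -> Prop) :
  (forall y, c < y -> P (a, y)) -> filter_prod (at_point a) pinf P.
Proof.
  intros H. apply (Filter_prod _ _ _ (fun x => x = a) (fun y => c < y)).
  - reflexivity.
  - exists c. auto.
  - intros x y -> Hy. auto.
Qed.

Lemma Iinf_correct f a : ex_RInt_gen f (at_point a) pinf ->
  is_RInt_gen f (at_point a) pinf (Iinf f a).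
Proof.
  apply (@RInt_gen_correct R_CompleteNormedModule);
    apply Proper_StrongProper; [apply at_point_filter | apply Rbar_locally_filter].
Qed.

Lemma Iinf_unique f a l : is_RInt_gen f (at_point a) pinf l -> Iinf f a = l.
Proof.
  apply (@is_RInt_gen_unique R_CompleteNormedModule);
    apply Proper_StrongProper; [apply at_point_filter | apply Rbar_locally_filter].
Qed.

Lemma Iinf_Chasles f a b : continuous_pos f -> 0 < a -> 0 < b ->
  ex_RInt_gen f (at_point b) pinf ->
  ex_RInt_gen f (at_point a) pinf /\ Iinf f a = RInt f a b + Iinf f b.
Proof.
  intros Hf Ha Hb Hex.
  assert (Hab : ex_RInt f a b) by (apply ex_RInt_continuous_pos; auto).
  assert (H1 : ex_RInt_gen f (at_point a) (at_point b)) by now apply (ex_RInt_gen_at_point f a b).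
  split.
  - eapply ex_RInt_gen_Chasles; eauto.
  - unfold Iinf. rewrite <- (RInt_gen_Chasles f b H1 Hex), RInt_gen_at_point; auto.
Qed.

Lemma is_derive_Iinf f b x : continuous_pos f -> 0 < b ->
  ex_RInt_gen f (at_point b) pinf -> 0 < x -> is_derive (Iinf f) x (- f x).
Proof.
  intros Hf Hb Hex Hx.
  apply (is_derive_ext_loc (fun a => RInt f a b + Iinf f b)).
  { apply (filter_imp (fun y => 0 < y)); [|apply locally_pos, Hx].
    intros y Hy. symmetry. apply Iinf_Chasles; auto. }
  eapply is_derive_eq.
  - apply (is_derive_Rplus (fun a => RInt f a b) (fun _ => Iinf f b)).
    + apply (is_derive_RInt' f (fun a => RInt f a b) x b); [|apply Hf, Hx].
      apply (filter_imp (fun y => 0 < y)); [|apply locally_pos, Hx].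
      intros y Hy. apply (@RInt_correct R_CompleteNormedModule), ex_RInt_continuous_pos; auto.
    + apply (@is_derive_const R_AbsRing R_NormedModule).
  - unfold opp, zero; simpl. ring.
Qed.

Lemma continuous_Iinf f b : continuous_pos f -> 0 < b ->
  ex_RInt_gen f (at_point b) pinf -> continuous_pos (Iinf f).
Proof.
  intros Hf Hb Hex x Hx.
  exact (continuous_of_is_derive _ _ _ (is_derive_Iinf f b x Hf Hb Hex Hx)).
Qed.

Lemma is_RInt_gen_of_lim f a l : continuous_pos f -> 0 < a ->
  filterlim (fun x => RInt f a x) pinf (locally l) -> is_RInt_gen f (at_point a) pinf l.
Proof.
  intros Hf Ha Hl P HP. destruct (Hl P HP) as [M HM].
  apply (filter_prod_at_point_pinf a (Rmax M a)). intros y Hy.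
  pose proof (Rmax_l M a). pose proof (Rmax_r M a).
  exists (RInt f a y). split.
  - apply (@RInt_correct R_CompleteNormedModule), ex_RInt_continuous_pos; auto; lra.
  - apply HM. lra.
Qed.

Lemma nondecreasing_bounded_lim (F : R -> R) a B :
  (forall x y, a <= x -> x <= y -> F x <= F y) -> (forall x, a <= x -> F x <= B) ->
  exists l, filterlim F pinf (locally l).
Proof.
  intros Hm Hb.
  set (E := fun v => exists x, a <= x /\ v = F x).
  assert (HE : bound E) by (exists B; intros v [x [Hx ->]]; auto).
  assert (HE2 : exists v, E v) by (exists (F a), a; split; [lra | auto]).
  destruct (completeness E HE HE2) as [l [Hub Hlub]].
  exists l. apply filterlim_locally. intros eps.
  assert (Hx0 : exists x0, a <= x0 /\ l - eps < F x0).
  { apply Classical_Prop.NNPP. intros Hn.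
    assert (l <= l - eps).
    { apply Hlub. intros v [x [Hx ->]]. apply Rnot_lt_le. intros Hc. apply Hn. eauto. }
    destruct eps; simpl in *; lra. }
  destruct Hx0 as [x0 [Hx0 Hl0]].
  exists (Rmax a x0). intros x Hx. pose proof (Rmax_l a x0). pose proof (Rmax_r a x0).
  assert (F x0 <= F x) by (apply Hm; lra).
  assert (F x <= l) by (apply Hub; exists x; split; [lra | auto]).
  apply ball_R, Rabs_lt_between. lra.
Qed.

Lemma Iinf_norm f g a : ex_RInt_gen f (at_point a) pinf -> ex_RInt_gen g (at_point a) pinf ->
  (forall x, a <= x -> Rabs (f x) <= g x) -> Rabs (Iinf f a) <= Iinf g a.
Proof.
  intros Hf Hg H.
  apply (@RInt_gen_norm R_CompleteNormedModule (at_point a) pinf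
           (at_point_filter a) (Rbar_locally_filter _) f g); try now apply Iinf_correct.
  - apply (filter_prod_at_point_pinf a a). intros y Hy. simpl. lra.
  - apply (filter_prod_at_point_pinf a a). intros y Hy x Hx. simpl in Hx. apply H. lra.
Qed.

Lemma Iinf_ge0 g a : ex_RInt_gen g (at_point a) pinf ->
  (forall x, a <= x -> 0 <= g x) -> 0 <= Iinf g a.
Proof.
  intros Hg H.
  assert (Rabs (Iinf g a) <= Iinf g a).
  { apply Iinf_norm; auto. intros x Hx. rewrite Rabs_pos_eq; auto; lra. }
  pose proof (Rabs_pos (Iinf g a)). lra.
Qed.

Section NonnegIntegrand.
Variables (g : R -> R) (a : R).
Hypotheses (Hc : continuous_pos g) (Ha : 0 < a) (Hex : ex_RInt_gen g (at_point a) pinf)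
  (Hpos : forall y, a <= y -> 0 <= g y).

Lemma Iinf_Chasles_ge0 x : a <= x ->
  ex_RInt_gen g (at_point x) pinf /\ Iinf g a = RInt g a x + Iinf g x /\
  0 <= RInt g a x /\ 0 <= Iinf g x.
Proof.
  intros Hx.
  destruct (Iinf_Chasles g x a Hc) as [Hexx _]; auto; try lra.
  destruct (Iinf_Chasles g a x Hc) as [_ Heq]; auto; try lra.
  repeat split; auto.
  - apply RInt_ge_0; [lra | apply ex_RInt_continuous_pos; auto; lra | intros; apply Hpos; lra].
  - apply Iinf_ge0; auto. intros; apply Hpos; lra.
Qed.

Lemma RInt_le_Iinf x : a <= x -> RInt g a x <= Iinf g a.
Proof. intros Hx. destruct (Iinf_Chasles_ge0 x Hx) as [_ [E [_ H]]]. lra. Qed.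

Lemma Iinf_le_Iinf x : a <= x -> Iinf g x <= Iinf g a.
Proof. intros Hx. destruct (Iinf_Chasles_ge0 x Hx) as [_ [E [H _]]]. lra. Qed.

End NonnegIntegrand.

Lemma Iinf_dominated f g a : continuous_pos f -> continuous_pos g -> 0 < a ->
  (forall x, a <= x -> Rabs (f x) <= g x) -> ex_RInt_gen g (at_point a) pinf ->
  ex_RInt_gen f (at_point a) pinf /\ Rabs (Iinf f a) <= Iinf g a.
Proof.
  intros Hf Hg Ha Hd Hex.
  (* f + g is nonnegative, so its integral converges by monotonicity *)
  set (h := fun x => f x + g x).
  assert (Hh : continuous_pos h) by (intros x Hx; apply continuousR_plus; auto).
  assert (Hhp : forall x, a <= x -> 0 <= h x).
  { intros x Hx. pose proof (Hd x Hx). pose proof (Rabs_maj2 (f x)). unfold h. lra. }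
  assert (Hgp : forall x, a <= x -> 0 <= g x).
  { intros x Hx. pose proof (Hd x Hx). pose proof (Rabs_pos (f x)). lra. }
  destruct (nondecreasing_bounded_lim (fun x => RInt h a x) a (2 * Iinf g a)) as [l Hl].
  - intros x y Hx Hy.
    rewrite <- (RInt_Chasles_R h a x y) by (apply ex_RInt_continuous_pos; auto; lra).
    assert (0 <= RInt h x y).
    { apply RInt_ge_0; [lra | apply ex_RInt_continuous_pos; auto; lra | intros; apply Hhp; lra]. }
    lra.
  - intros x Hx.
    assert (RInt h a x <= RInt (fun y => 2 * g y) a x).
    { apply RInt_le; auto; try (apply ex_RInt_continuous_pos; auto; try lra).
      - intros y Hy. apply continuousR_scal, Hg. lra.
      - intros y Hy. pose proof (Hd y ltac:(lra)). pose proof (Rle_abs (f y)). unfold h. lra. }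
    rewrite RInt_scal_R in H by (apply ex_RInt_continuous_pos; auto; lra).
    pose proof (RInt_le_Iinf g a Hg Ha Hex Hgp x Hx). lra.
  - assert (Hfi : is_RInt_gen f (at_point a) pinf (minus l (Iinf g a))).
    { assert (Hhi : is_RInt_gen h (at_point a) pinf l) by (apply is_RInt_gen_of_lim; auto).
      pose proof (is_RInt_gen_minus h g l (Iinf g a) Hhi (Iinf_correct g a Hex)) as Hm.
      replace f with (fun y => minus (h y) (g y)); [exact Hm|].
      apply functional_extensionality. intros y. unfold h, minus, plus, opp; simpl. ring. }
    assert (Hexf : ex_RInt_gen f (at_point a) pinf) by (eexists; eauto).
    split; auto. apply Iinf_norm; auto.
Qed.

Lemma Iinf_opp f a : ex_RInt_gen f (at_point a) pinf ->
  ex_RInt_gen (fun x => - f x) (at_point a) pinf /\ Iinf (fun x => - f x) a = - Iinf f a.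
Proof.
  intros H. pose proof (is_RInt_gen_opp f _ (Iinf_correct f a H)) as H1.
  split; [eexists; exact H1 | apply Iinf_unique, H1].
Qed.

Lemma Iinf_scal c f a : ex_RInt_gen f (at_point a) pinf ->
  ex_RInt_gen (fun x => c * f x) (at_point a) pinf /\ Iinf (fun x => c * f x) a = c * Iinf f a.
Proof.
  intros H. pose proof (is_RInt_gen_scal f c _ (Iinf_correct f a H)) as H1.
  split; [eexists; exact H1 | apply Iinf_unique, H1].
Qed.

Lemma Iinf_plus f g a : ex_RInt_gen f (at_point a) pinf -> ex_RInt_gen g (at_point a) pinf ->
  ex_RInt_gen (fun x => f x + g x) (at_point a) pinf /\
  Iinf (fun x => f x + g x) a = Iinf f a + Iinf g a.
Proof.
  intros H H'.
  pose proof (is_RInt_gen_plus f g _ _ (Iinf_correct f a H) (Iinf_correct g a H')) as H1.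
  split; [eexists; exact H1 | apply Iinf_unique, H1].
Qed.

Lemma ex_RInt_gen_shift f a x : a <= x -> 0 < x -> continuous_pos f ->
  ex_RInt_gen f (at_point a) pinf -> ex_RInt_gen f (at_point x) pinf.
Proof.
  intros Hax Hx Hc [l Hl].
  assert (Happrox : forall eps : posreal, exists M0, forall y, M0 < y ->
            ex_RInt f a y /\ Rabs (RInt f a y - l) < eps).
  { intros eps. destruct (Hl (ball l eps) (locally_ball l eps)) as [Q R HQ [M HR] Himp].
    exists M. intros y Hy. destruct (Himp a y HQ (HR y Hy)) as [v [Hv Hb]]. simpl in Hv.
    split; [eexists; eauto | rewrite (is_RInt_unique f a y v Hv); exact Hb]. }
  destruct (Happrox (mkposreal 1 Rlt_0_1)) as [M0 HM0].
  assert (Hfx : ex_RInt f a x).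
  { destruct (HM0 (Rmax M0 x + 1)) as [He _]; [pose proof (Rmax_l M0 x); lra|].
    apply (@ex_RInt_Chasles_1 R_CompleteNormedModule f a x (Rmax M0 x + 1)); auto.
    pose proof (Rmax_r M0 x); lra. }
  exists (l - RInt f a x). apply is_RInt_gen_of_lim; auto.
  apply filterlim_locally. intros eps.
  destruct (Happrox eps) as [M1 HM1].
  exists (Rmax M1 x). intros y Hy.
  pose proof (Rmax_l M1 x). pose proof (Rmax_r M1 x).
  destruct (HM1 y) as [He Hb]; [lra|].
  assert (Hxy : ex_RInt f x y)
    by (apply (@ex_RInt_Chasles_2 R_CompleteNormedModule f a x y); auto; lra).
  pose proof (RInt_Chasles_R f a x y Hfx Hxy) as E.
  apply ball_R. replace (RInt f x y - (l - RInt f a x)) with (RInt f a y - l) by lra. exact Hb.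
Qed.

(** * The recursion defining the Q_k and its majorant *)

Fixpoint sum1 (f : nat -> R) (n : nat) : R :=
  match n with O => 0 | S n => sum1 f n + f (S n) end.

Lemma sum1_S f n : sum1 f (S n) = sum1 f n + f (S n).
Proof. reflexivity. Qed.

Lemma sum1_ext f g n : (forall j, (1 <= j <= n)%nat -> f j = g j) -> sum1 f n = sum1 g n.
Proof. induction n; simpl; intros H; auto. rewrite IHn, H; auto; try lia. intros; apply H; lia. Qed.

Lemma sum1_plus f g n : sum1 (fun j => f j + g j) n = sum1 f n + sum1 g n.
Proof. induction n; simpl; [ring | rewrite IHn; ring]. Qed.

Lemma sum1_scal c f n : sum1 (fun j => c * f j) n = c * sum1 f n.
Proof. induction n; simpl; [ring | rewrite IHn; ring]. Qed.

Lemma sum1_le f g n : (forall j, (1 <= j <= n)%nat -> f j <= g j) -> sum1 f n <= sum1 g n.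
Proof.
  induction n; simpl; intros H; [lra|].
  assert (sum1 f n <= sum1 g n) by (apply IHn; intros; apply H; lia).
  pose proof (H (S n) ltac:(lia)). lra.
Qed.

Lemma sum1_abs f n : Rabs (sum1 f n) <= sum1 (fun j => Rabs (f j)) n.
Proof.
  induction n; simpl; [rewrite Rabs_R0; lra|].
  eapply Rle_trans; [apply Rabs_triang | lra].
Qed.

Lemma sum1_ge0 f n : (forall j, (1 <= j <= n)%nat -> 0 <= f j) -> 0 <= sum1 f n.
Proof.
  intros H. replace 0 with (sum1 (fun _ => 0) n); [apply sum1_le; auto|].
  clear H; induction n; simpl; [|rewrite IHn]; ring.
Qed.

Lemma sum1_le_n f m n : (m <= n)%nat -> (forall j, 0 <= f j) -> sum1 f m <= sum1 f n.
Proof. intros H Hp. induction H; simpl; [lra | pose proof (Hp (S m0)); lra]. Qed.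

Lemma sum1_shift f n : sum1 f (S n) = f 1%nat + sum1 (fun k => f (S k)) n.
Proof. induction n; simpl in *; [|rewrite IHn]; ring. Qed.

Lemma sum1_continuous (F : nat -> R -> R) n x :
  (forall j, (1 <= j <= n)%nat -> continuous (F j) x) ->
  continuous (fun s => sum1 (fun j => F j s) n) x.
Proof.
  induction n; intros H; simpl; [apply continuousR_const|].
  apply continuousR_plus; [apply IHn; intros; apply H | apply H]; lia.
Qed.

Lemma fold_right_Rplus_sum1 (g : nat -> R) k : fold_right Rplus 0 (map g (seq 1 k)) = sum1 g k.
Proof.
  assert (Hc : forall (l : list R) c, fold_right Rplus c l = fold_right Rplus 0 l + c).
  { induction l; intros c; simpl; [|rewrite IHl]; ring. }
  induction k; [reflexivity|].
  rewrite seq_S, map_app, fold_right_app. simpl. rewrite Hc, IHk.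
  replace (1 + k)%nat with (S k) by lia. ring.
Qed.

Lemma sum1_convolution (x : nat -> R) K :
  sum1 (fun k => sum1 (fun j => x j * x (S k - j)%nat) k) K =
  sum1 (fun j => x j * sum1 x (S K - j)%nat) K.
Proof.
  induction K; [reflexivity|].
  rewrite sum1_S, IHK. cbv beta.
  transitivity (sum1 (fun j => x j * sum1 x (S K - j)%nat + x j * x (S (S K) - j)%nat) (S K)).
  - rewrite sum1_plus, (sum1_S (fun j => x j * sum1 x (S K - j)%nat)), Nat.sub_diag.
    simpl. ring.
  - apply sum1_ext. intros j Hj. replace (S (S K) - j)%nat with (S (S K - j)) by lia.
    simpl. ring.
Qed.

Lemma Qlist_S M k : (1 <= k)%nat -> Qlist M (S k) = Qlist M k ++
  ((fun t => - Iinf (fun s => fold_right Rplus 0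
      (map (fun j => nth (j - 1) (Qlist M k) (fun _ => 0) s
                     * nth (k - j) (Qlist M k) (fun _ => 0) s) (seq 1 k))) t) :: nil).
Proof. intros H. destruct k; [lia | reflexivity]. Qed.

Lemma length_Qlist M k : length (Qlist M k) = k.
Proof.
  induction k; [reflexivity|]. destruct k; [reflexivity|].
  rewrite Qlist_S, length_app, IHk by lia. simpl. lia.
Qed.

Lemma nth_Qlist M k i : (i < k)%nat -> nth i (Qlist M k) (fun _ => 0) = Qk M (S i).
Proof.
  induction k; intros H; [lia|].
  destruct (Nat.eq_dec i k) as [->|Hne].
  - unfold Qk. f_equal. lia.
  - destruct k; [lia|]. rewrite Qlist_S, app_nth1 by (rewrite ?length_Qlist; lia).
    apply IHk; lia.
Qed.

Lemma Qk_rec M k : (1 <= k)%nat ->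
  Qk M (S k) = fun t => - Iinf (fun s => sum1 (fun j => Qk M j s * Qk M (S k - j) s) k) t.
Proof.
  intros Hk. unfold Qk at 1. replace (S k - 1)%nat with k by lia.
  rewrite Qlist_S, app_nth2, length_Qlist, Nat.sub_diag by (rewrite ?length_Qlist; lia).
  simpl nth. apply functional_extensionality. intros t. do 2 f_equal.
  apply functional_extensionality. intros s.
  rewrite fold_right_Rplus_sum1. apply sum1_ext. intros j Hj.
  rewrite !nth_Qlist by lia. f_equal; f_equal; lia.
Qed.

(* With the
   weights of [qweight] below, |Q_j Q_l| <= c_j c_l Hmaj / 6^4 and \int_t^\infty Hmaj <= 2 A:
   this is where 36 and 2/6^4 come from. *)
Fixpoint qbound_list (k : nat) : list R :=
  match k with
  | O => nil
  | S O => 36 :: nil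
  | S k' => let l := qbound_list k' in
      l ++ (2 / 1296 * fold_right Rplus 0
              (map (fun j => nth (j - 1) l 0 * nth (k' - j) l 0) (seq 1 k')) :: nil)
  end.

Definition qbound (k : nat) : R := nth (k - 1) (qbound_list k) 0.

Lemma qbound_list_S k : (1 <= k)%nat -> qbound_list (S k) = qbound_list k ++
  (2 / 1296 * fold_right Rplus 0
     (map (fun j => nth (j - 1) (qbound_list k) 0 * nth (k - j) (qbound_list k) 0)
        (seq 1 k)) :: nil).
Proof. intros H. destruct k; [lia | reflexivity]. Qed.

Lemma length_qbound_list k : length (qbound_list k) = k.
Proof.
  induction k; [reflexivity|]. destruct k; [reflexivity|].
  rewrite qbound_list_S, length_app, IHk by lia. simpl. lia.
Qed.

Lemma nth_qbound_list k i : (i < k)%nat -> nth i (qbound_list k) 0 = qbound (S i).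
Proof.
  induction k; intros H; [lia|].
  destruct (Nat.eq_dec i k) as [->|Hne].
  - unfold qbound. f_equal. lia.
  - destruct k; [lia|]. rewrite qbound_list_S, app_nth1 by (rewrite ?length_qbound_list; lia).
    apply IHk; lia.
Qed.

Lemma qbound_rec k : (1 <= k)%nat ->
  qbound (S k) = 2 / 1296 * sum1 (fun j => qbound j * qbound (S k - j)) k.
Proof.
  intros Hk. unfold qbound at 1. replace (S k - 1)%nat with k by lia.
  rewrite qbound_list_S, app_nth2, length_qbound_list, Nat.sub_diag
    by (rewrite ?length_qbound_list; lia).
  simpl nth. f_equal. rewrite fold_right_Rplus_sum1. apply sum1_ext. intros j Hj.
  rewrite !nth_qbound_list by lia. f_equal; f_equal; lia.
Qed.

Lemma qbound_1 : qbound 1 = 36.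
Proof. reflexivity. Qed.

Lemma qbound_2 : qbound 2 = 2.
Proof. rewrite qbound_rec by lia. simpl. rewrite qbound_1. lra. Qed.

Lemma qbound_ge0 k : 0 <= qbound k.
Proof.
  induction k as [k IH] using (well_founded_induction Wf_nat.lt_wf).
  destruct k as [|[|k]]; [unfold qbound; simpl; lra | rewrite qbound_1; lra|].
  rewrite qbound_rec by lia. apply Rmult_le_pos; [lra|].
  apply sum1_ge0. intros j Hj. apply Rmult_le_pos; apply IH; lia.
Qed.

(* S_(K+1) <= 36 + (2/6^4) S_K^2, and 36 + 2 * 39^2 / 6^4 < 39. *)
Lemma sum1_qbound_le K : sum1 qbound K <= 39.
Proof.
  induction K; [simpl; lra|].
  rewrite sum1_shift, qbound_1.
  rewrite (sum1_ext _ (fun k => 2 / 1296 * sum1 (fun j => qbound j * qbound (S k - j)) k))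
    by (intros j Hj; apply qbound_rec; lia).
  rewrite sum1_scal, sum1_convolution.
  assert (Hge : 0 <= sum1 qbound K) by (apply sum1_ge0; intros; apply qbound_ge0).
  assert (sum1 (fun j => qbound j * sum1 qbound (S K - j)) K <= sum1 qbound K * sum1 qbound K).
  { rewrite <- sum1_scal. apply sum1_le. intros j Hj.
    rewrite Rmult_comm. apply Rmult_le_compat_r; [apply qbound_ge0|].
    apply sum1_le_n; [lia | intros; apply qbound_ge0]. }
  nra.
Qed.

Lemma sum_n_sum1 (c : nat -> R) N : sum_n c N = c 0%nat + sum1 c N.
Proof.
  induction N; [rewrite sum_O; simpl; ring|].
  rewrite sum_Sn, IHN. simpl. unfold plus; simpl. ring.
Qed.

Lemma Series_ge0_le (c : nat -> R) B : (forall n, 0 <= c n) -> (forall N, sum_n c N <= B) ->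
  ex_series c /\ Series c <= B.
Proof.
  intros Hp Hb.
  destruct (ex_finite_lim_seq_incr (sum_n c) B) as [l Hl]; auto.
  { intros n. rewrite sum_Sn. unfold plus; simpl. pose proof (Hp (S n)). lra. }
  split; [eexists; exact Hl|].
  rewrite (is_series_unique c l Hl).
  exact (is_lim_seq_le (sum_n c) (fun _ => B) l B Hb Hl (is_lim_seq_const B)).
Qed.

Lemma Series_minus_first_le (a : nat -> R) B :
  (forall N, sum1 (fun n => Rabs (a n)) N <= B) -> Rabs (Series a - a 0%nat) <= B.
Proof.
  intros Hb.
  assert (Hab : forall N, sum_n (fun n => Rabs (a n)) N <= Rabs (a 0%nat) + B).
  { intros N. rewrite sum_n_sum1. specialize (Hb N). lra. }
  destruct (Series_ge0_le (fun n => Rabs (a n)) _ (fun n => Rabs_pos _) Hab) as [Hex _].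
  rewrite Series_incr_1 by (apply ex_series_Rabs; auto).
  replace (a 0%nat + Series (fun k => a (S k)) - a 0%nat) with (Series (fun k => a (S k))) by ring.
  assert (Hb2 : forall N, sum_n (fun k => Rabs (a (S k))) N <= B).
  { intros N. rewrite sum_n_sum1. specialize (Hb (S N)). rewrite sum1_shift in Hb. lra. }
  destruct (Series_ge0_le (fun k => Rabs (a (S k))) B (fun n => Rabs_pos _) Hb2) as [Hex2 Hle].
  eapply Rle_trans; [apply Series_Rabs, Hex2 | exact Hle].
Qed.

(* One-sided continuity at 0 is encoded through the extension z |-> f (max z 0). *)
Definition continuous_nonneg (f : R -> R) :=
  forall y, 0 <= y -> continuous (fun z => f (Rmax z 0)) y.

Lemma continuous_Rmax0 y : continuous (fun z => Rmax z 0) y.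
Proof.
  apply (continuous_ext (fun z => (z + Rabs z) / 2)).
  - intros z. unfold Rmax. destruct (Rle_dec z 0); [rewrite Rabs_left1 | rewrite Rabs_right]; lra.
  - unfold Rdiv. apply (continuousR_mult (fun z => z + Rabs z) (fun _ => / 2)).
    + apply continuousR_plus; [|apply continuous_Rabs_comp]; apply (@continuous_id R_UniformSpace).
    + apply continuousR_const.
Qed.

Section ContinuousNonneg.
Variable f : R -> R.
Hypothesis Hf : continuous_nonneg f.

Lemma continuous_nonneg_ext y : continuous (fun z => f (Rmax z 0)) y.
Proof.
  destruct (Rle_dec 0 y) as [Hy|Hy]; [apply Hf; auto|].
  apply (continuous_ext_loc _ (fun _ => f 0)); [|apply continuousR_const].
  exists (mkposreal (- y) ltac:(lra)). intros z Hz.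
  apply (proj1 (ball_R _ _ _)), Rabs_lt_between in Hz. simpl in Hz.
  rewrite Rmax_right by lra. reflexivity.
Qed.

Lemma continuous_nonneg_pos : continuous_pos f.
Proof.
  intros y Hy. apply (continuous_ext_loc _ (fun z => f (Rmax z 0))); [|apply Hf; lra].
  apply (filter_imp (fun z => 0 < z)); [|apply locally_pos, Hy].
  intros z Hz. rewrite Rmax_left by lra. reflexivity.
Qed.

Lemma ex_RInt_continuous_nonneg a b : 0 <= a -> 0 <= b -> ex_RInt f a b.
Proof.
  intros Ha Hb. apply (@ex_RInt_ext R_NormedModule (fun z => f (Rmax z 0))).
  - intros x [Hx _]. rewrite Rmax_left; auto. unfold Rmin in Hx. destruct (Rle_dec a b); lra.
  - apply (@ex_RInt_continuous R_CompleteNormedModule). intros z _. apply continuous_nonneg_ext.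
Qed.

Lemma continuous_nonneg_Iinf : ex_RInt_gen f (at_point 1) pinf -> continuous_nonneg (Iinf f).
Proof.
  intros H1.
  set (ft := fun z => f (Rmax z 0)).
  assert (HI : forall y, 0 <= y -> Iinf f y = RInt f y 1 + Iinf f 1).
  { intros y Hy.
    assert (E : ex_RInt_gen f (at_point y) (at_point 1))
      by (apply (ex_RInt_gen_at_point f y 1), ex_RInt_continuous_nonneg; lra).
    unfold Iinf. rewrite <- (RInt_gen_Chasles f 1 E H1), RInt_gen_at_point; [reflexivity|].
    apply ex_RInt_continuous_nonneg; lra. }
  intros y Hy.
  apply (continuous_ext (fun z => RInt ft (Rmax z 0) 1 + Iinf f 1)).
  { intros z. rewrite (HI (Rmax z 0)) by apply Rmax_r. f_equal. apply RInt_ext. intros x [Hx _].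
    unfold ft. rewrite Rmax_left; auto. pose proof (Rmax_r z 0).
    unfold Rmin in Hx. destruct (Rle_dec (Rmax z 0) 1); lra. }
  apply continuousR_plus; [|apply continuousR_const].
  apply (continuous_comp (fun z => Rmax z 0) (fun w => RInt ft w 1)); [apply continuous_Rmax0|].
  eapply continuous_of_is_derive, (is_derive_RInt' ft (fun z => RInt ft z 1) _ 1).
  - apply filter_forall. intros z. apply (@RInt_correct R_CompleteNormedModule ft).
    apply (@ex_RInt_continuous R_CompleteNormedModule). intros; apply continuous_nonneg_ext.
  - apply continuous_nonneg_ext.
Qed.

End ContinuousNonneg.

Lemma continuous_nonneg_abs f : continuous_nonneg f -> continuous_nonneg (fun y => Rabs (f y)).
Proof. intros H y Hy. apply continuous_Rabs_comp, H, Hy. Qed.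

Lemma continuous_nonneg_of_within (M : R -> R) :
  (forall t, 0 <= t -> filterlim M (within (fun x => 0 <= x) (locally t)) (locally (M t))) ->
  continuous_nonneg M.
Proof.
  intros H y Hy. destruct (Req_dec y 0) as [->|Hy0].
  - intros P HP. rewrite Rmax_left in HP by lra.
    destruct (H 0 (Rle_refl 0) P HP) as [e He]. exists e. intros z Hz.
    apply He; [|apply Rmax_r].
    apply (proj1 (ball_R _ _ _)) in Hz. apply ball_R.
    unfold Rmax. destruct (Rle_dec z 0); [rewrite Rminus_0_r, Rabs_R0; apply cond_pos | exact Hz].
  - apply (continuous_ext_loc _ M).
    + apply (filter_imp (fun z => 0 < z)); [|apply locally_pos; lra].
      intros z Hz. rewrite Rmax_left by lra. reflexivity.
    + intros P HP. destruct (H y Hy P HP) as [e He]. unfold filtermap.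
      apply (filter_imp (fun z => ball y e z /\ 0 < z)); [intros z [Hz Hz0]; apply He; auto; lra|].
      apply filter_and; [exists e; auto | apply locally_pos; lra].
Qed.

(** * Energy estimate for the system *)

Lemma Gronwall_two_sided (f df : R -> R) K u t : u <= t -> 0 <= K ->
  (forall y, u <= y <= t -> is_derive f y (df y)) ->
  (forall y, u <= y <= t -> Rabs (df y) <= K * f y) ->
  f t * exp (- K * t) <= f u * exp (- K * u) /\ f u * exp (K * u) <= f t * exp (K * t).
Proof.
  intros Hut HK Hd Hb. split.
  - apply (derive_nonpos_le (fun y => f y * exp (- K * y))
             (fun y => df y * exp (- K * y) + f y * (- K * exp (- K * y)))); auto.
    + intros y Hy. apply (is_derive_Rmult f (fun y => exp (- K * y))); [auto|].
      apply (is_derive_exp_comp (fun y => - K * y)), is_derive_lin.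
    + intros y Hy. pose proof (Hb y Hy). pose proof (Rle_abs (df y)). pose proof (exp_pos (- K * y)).
      replace (df y * exp (- K * y) + f y * (- K * exp (- K * y)))
        with ((df y - K * f y) * exp (- K * y)) by ring.
      apply Rmult_le_0_r; lra.
  - enough (- (f t * exp (K * t)) <= - (f u * exp (K * u))) by lra.
    apply (derive_nonpos_le (fun y => - (f y * exp (K * y)))
             (fun y => - (df y * exp (K * y) + f y * (K * exp (K * y))))); auto.
    + intros y Hy. apply is_derive_Ropp, (is_derive_Rmult f (fun y => exp (K * y))); [auto|].
      apply (is_derive_exp_comp (fun y => K * y)), is_derive_lin.
    + intros y Hy. pose proof (Hb y Hy). pose proof (Rabs_maj2 (df y)). pose proof (exp_pos (K * y)).
      replace (- (df y * exp (K * y) + f y * (K * exp (K * y))))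
        with (- ((df y + K * f y) * exp (K * y))) by ring.
      enough (0 <= (df y + K * f y) * exp (K * y)) by lra.
      apply Rmult_le_pos; lra.
Qed.

Lemma Rabs_diff_le_RInt (G dG h : R -> R) T0 u t : T0 < u <= t ->
  (forall y, T0 < y -> continuous h y) ->
  (forall y, u <= y <= t -> is_derive G y (dG y)) ->
  (forall y, u <= y <= t -> Rabs (dG y) <= h y) -> Rabs (G t - G u) <= RInt h u t.
Proof.
  intros [Hu Hut] Hh Hd Hb.
  assert (HI : forall y, T0 < y -> is_derive (fun z => RInt h u z) y (h y)).
  { intros y Hy. apply is_derive_RInt_R; [|apply Hh, Hy].
    exists (mkposreal (y - T0) ltac:(lra)). intros z Hz.
    apply (proj1 (ball_R _ _ _)), Rabs_lt_between in Hz. simpl in Hz.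
    apply (@ex_RInt_continuous R_CompleteNormedModule).
    intros w [Hw _]. apply Hh. unfold Rmin in Hw. destruct (Rle_dec u z); lra. }
  assert (H1 : G t - RInt h u t <= G u - RInt h u u).
  { apply (derive_nonpos_le (fun y => G y - RInt h u y) (fun y => dG y - h y)); auto.
    - intros y Hy. apply is_derive_Rminus; [apply Hd | apply HI]; lra.
    - intros y Hy. pose proof (Hb y Hy). pose proof (Rle_abs (dG y)). lra. }
  assert (H2 : - G t - RInt h u t <= - G u - RInt h u u).
  { apply (derive_nonpos_le (fun y => - G y - RInt h u y) (fun y => - dG y - h y)); auto.
    - intros y Hy. apply is_derive_Rminus; [apply is_derive_Ropp, Hd | apply HI]; lra.
    - intros y Hy. pose proof (Hb y Hy). pose proof (Rabs_maj2 (dG y)). lra. }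
  rewrite RInt_point in H1, H2. unfold zero in H1, H2. simpl in H1, H2. apply Rabs_le. lra.
Qed.

(* With p = a^2 + b^2 and E = p + c^2 + d^2, this is the derivative of
   ln E - 4 P p / E when E' = -4 be p, p' = dp and P' = -Q. *)
Lemma gauge_derivative_bound (a b c d be Q P x : R) :
  0 < a^2 + b^2 + c^2 + d^2 -> 0 <= x -> Rabs P <= 1 ->
  let p := a^2 + b^2 in let E := a^2 + b^2 + c^2 + d^2 in
  let dp := 2 * a * (-2 * be * a - x * d) + 2 * b * (-2 * be * b + x * c) in
  Rabs ((-4 * be * p) / E - 4 * ((- Q) * (p / E) + P * ((dp * E - p * (-4 * be * p)) / E ^ 2)))
  <= 4 * Rabs (be - Q) + 4 * Rabs P * (Rabs be + x).
Proof.
  intros HE Hx HP p E dp.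
  assert (HE' : 0 < E) by exact HE.
  pose (th := p / E). pose (w := (b * c - a * d) / E).
  assert (Hth : 0 <= th <= 1).
  { unfold th, p. split; [apply Rdiv_le_0_compat; nra|].
    apply Rmult_le_reg_r with E; auto. unfold Rdiv. rewrite Rmult_assoc, Rinv_l by lra.
    unfold E. nra. }
  assert (Hw : Rabs (2 * w) <= 1).
  { assert (Hw2 : Rabs (2 * (b * c - a * d)) <= E).
    { apply Rabs_le. unfold E. pose proof (pow2_ge_0 (b + c)). pose proof (pow2_ge_0 (a - d)).
      pose proof (pow2_ge_0 (b - c)). pose proof (pow2_ge_0 (a + d)). split; nra. }
    replace (2 * (b * c - a * d)) with (2 * w * E) in Hw2 by (unfold w; field; lra).
    rewrite Rabs_mult, (Rabs_pos_eq E) in Hw2 by lra. pose proof (Rabs_pos (2 * w)). nra. }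
  (* the a, b, c, d enter only through th = p / E and w, with |th (1 - th)| <= 1/4 *)
  replace ((-4 * be * p) / E - 4 * ((- Q) * (p / E) + P * ((dp * E - p * (-4 * be * p)) / E ^ 2)))
    with (-4 * (be - Q) * th - 4 * P * (-4 * be * (th * (1 - th)) + x * (2 * w)))
    by (unfold th, w, dp, p, E; field; unfold E, p in HE'; lra).
  assert (H1 : Rabs (-4 * (be - Q) * th) <= 4 * Rabs (be - Q)).
  { rewrite !Rabs_mult, (Rabs_pos_eq th), Rabs_left by lra. pose proof (Rabs_pos (be - Q)). nra. }
  assert (H2 : Rabs (-4 * be * (th * (1 - th)) + x * (2 * w)) <= Rabs be + x).
  { eapply Rle_trans; [apply Rabs_triang|].
    assert (Hq : 0 <= th * (1 - th) <= / 4) by (pose proof (pow2_ge_0 (th - / 2)); nra).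
    rewrite (Rabs_mult _ (th * (1 - th))), (Rabs_mult (-4)), (Rabs_mult x), Rabs_left,
      (Rabs_pos_eq (th * (1 - th))), (Rabs_pos_eq x) by lra.
    pose proof (Rabs_pos be). pose proof (Rabs_pos (2 * w)).
    assert (Rabs be * (th * (1 - th)) <= Rabs be * / 4) by (apply Rmult_le_compat_l; lra).
    assert (x * Rabs (2 * w) <= x) by nra.
    lra. }
  eapply Rle_trans; [apply Rabs_triang|].
  rewrite Rabs_Ropp, (Rabs_mult (4 * P)), (Rabs_mult 4), (Rabs_pos_eq 4) by lra.
  pose proof (Rabs_pos P). pose proof (Rabs_pos (-4 * be * (th * (1 - th)) + x * (2 * w))). nra.
Qed.

Section Energy.
Variables (a b c d be Q P h : R -> R) (x u t B T0 : R).
Hypotheses (Hut : u <= t) (Hx : 0 <= x) (HT0u : T0 < u)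
  (Ha : forall y, u <= y <= t -> is_derive a y (-2 * be y * a y - x * d y))
  (Hb : forall y, u <= y <= t -> is_derive b y (-2 * be y * b y + x * c y))
  (Hc : forall y, u <= y <= t -> is_derive c y (- x * b y))
  (Hd : forall y, u <= y <= t -> is_derive d y (x * a y))
  (HPd : forall y, u <= y <= t -> is_derive P y (- Q y))
  (HP1 : forall y, u <= y <= t -> Rabs (P y) <= 1)
  (Hh : forall y, T0 < y -> continuous h y)
  (Hhb : forall y, u <= y <= t -> 4 * Rabs (be y - Q y) + 4 * Rabs (P y) * (Rabs (be y) + x) <= h y)
  (HB : forall y, u <= y <= t -> Rabs (be y) <= B).

Definition En y := a y ^ 2 + b y ^ 2 + c y ^ 2 + d y ^ 2.

Lemma En_bounds y : 0 <= a y ^ 2 + b y ^ 2 <= En y.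
Proof.
  unfold En. pose proof (pow2_ge_0 (a y)). pose proof (pow2_ge_0 (b y)).
  pose proof (pow2_ge_0 (c y)). pose proof (pow2_ge_0 (d y)). lra.
Qed.

Lemma is_derive_En y : u <= y <= t -> is_derive En y (-4 * be y * (a y ^ 2 + b y ^ 2)).
Proof.
  intros Hy. unfold En. eapply is_derive_eq.
  - apply is_derive_Rplus; [apply is_derive_Rplus; [apply is_derive_Rplus|]|];
      apply is_derive_Rsqr; [apply Ha | apply Hb | apply Hc | apply Hd]; exact Hy.
  - ring.
Qed.

Lemma En_Gronwall y : u <= y <= t ->
  En y * exp (- (4 * B) * y) <= En u * exp (- (4 * B) * u) /\
  En u * exp (4 * B * u) <= En y * exp (4 * B * y).
Proof.
  intros Hy.
  apply (Gronwall_two_sided En (fun z => -4 * be z * (a z ^ 2 + b z ^ 2)) (4 * B) u y); try lra.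
  - pose proof (HB u ltac:(lra)). pose proof (Rabs_pos (be u)). lra.
  - intros z Hz. apply is_derive_En. lra.
  - intros z Hz. pose proof (HB z ltac:(lra)). pose proof (En_bounds z).
    rewrite !Rabs_mult, (Rabs_pos_eq (_ + _)), Rabs_left by lra.
    pose proof (Rabs_pos (be z)).
    assert (Rabs (be z) * (a z ^ 2 + b z ^ 2) <= B * En z) by (apply Rmult_le_compat; lra).
    lra.
Qed.

Lemma En_eq0 : En u = 0 -> En t = 0.
Proof.
  intros H0. destruct (En_Gronwall t ltac:(lra)) as [H _]. rewrite H0, Rmult_0_l in H.
  pose proof (exp_pos (- (4 * B) * t)). pose proof (En_bounds t). nra.
Qed.

Lemma En_pos : 0 < En u -> forall y, u <= y <= t -> 0 < En y.
Proof.
  intros H0 y Hy. destruct (En_Gronwall y Hy) as [_ H].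
  pose proof (exp_pos (4 * B * u)). pose proof (exp_pos (4 * B * y)).
  pose proof (En_bounds y). nra.
Qed.

Lemma ln_En_variation : 0 < En u -> Rabs (ln (En t) - ln (En u)) <= RInt h u t + 8.
Proof.
  intros H0. pose proof (En_pos H0) as Hpos.
  set (th := fun y => (a y ^ 2 + b y ^ 2) / En y).
  assert (Hth : forall y, u <= y <= t -> Rabs (4 * (P y * th y)) <= 4).
  { intros y Hy. pose proof (En_bounds y). pose proof (Hpos y Hy). pose proof (HP1 y Hy).
    assert (0 <= th y <= 1).
    { unfold th. split; [apply Rdiv_le_0_compat; lra|].
      apply Rmult_le_reg_r with (En y); auto. unfold Rdiv. rewrite Rmult_assoc, Rinv_l; lra. }
    rewrite !Rabs_mult, (Rabs_pos_eq 4), (Rabs_pos_eq (th y)) by lra.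
    pose proof (Rabs_pos (P y)). nra. }
  assert (HG : Rabs ((ln (En t) - 4 * (P t * th t)) - (ln (En u) - 4 * (P u * th u)))
                 <= RInt h u t).
  { set (dp := fun y => 2 * a y * (-2 * be y * a y - x * d y) + 2 * b y * (-2 * be y * b y + x * c y)).
    set (dE := fun y => -4 * be y * (a y ^ 2 + b y ^ 2)).
    apply (Rabs_diff_le_RInt (fun y => ln (En y) - 4 * (P y * th y))
             (fun y => dE y / En y - 4 * (- Q y * th y
                         + P y * ((dp y * En y - (a y ^ 2 + b y ^ 2) * dE y) / En y ^ 2)))
             h T0); auto.
    - intros y Hy. apply is_derive_Rminus.
      + apply is_derive_ln_comp; [apply is_derive_En, Hy | apply Hpos, Hy].
      + apply is_derive_scal, (is_derive_Rmult P th); [apply HPd, Hy|].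
        apply (is_derive_Rdiv (fun z => a z ^ 2 + b z ^ 2) En);
          [| apply is_derive_En, Hy | pose proof (Hpos y Hy); lra].
        apply (is_derive_Rplus (fun z => a z ^ 2) (fun z => b z ^ 2));
          apply is_derive_Rsqr; [apply Ha | apply Hb]; exact Hy.
    - intros y Hy. eapply Rle_trans; [|apply Hhb, Hy].
      exact (gauge_derivative_bound (a y) (b y) (c y) (d y) (be y) (Q y) (P y) x
               (Hpos y Hy) Hx (HP1 y Hy)). }
  pose proof (Hth t ltac:(lra)). pose proof (Hth u ltac:(lra)).
  apply Rabs_le. apply Rabs_le_between in HG.
  repeat match goal with H : Rabs _ <= 4 |- _ => apply Rabs_le_between in H end. lra.
Qed.

Lemma sqrt_En_ratio :
  / exp (RInt h u t + 8) * sqrt (En u) <= sqrt (En t) /\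
  sqrt (En t) <= exp (RInt h u t + 8) * sqrt (En u).
Proof.
  set (L := RInt h u t + 8).
  assert (HL : 0 <= L).
  { enough (0 <= RInt h u t) by (unfold L; lra).
    apply RInt_ge_0; auto.
    - apply (@ex_RInt_continuous R_CompleteNormedModule). intros y [Hy _].
      apply Hh. rewrite Rmin_left in Hy; lra.
    - intros y Hy. eapply Rle_trans; [|apply Hhb; lra].
      pose proof (Rabs_pos (be y - Q y)). pose proof (Rabs_pos (P y)).
      pose proof (Rabs_pos (be y)). nra. }
  assert (He1 : 1 <= exp L) by (pose proof (exp_ineq1_le L); lra).
  pose proof (En_bounds u). pose proof (En_bounds t). pose proof (exp_pos L).
  destruct (Req_dec (En u) 0) as [E0|E0].
  { rewrite E0, En_eq0, sqrt_0 by exact E0. split; lra. }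
  assert (Hu : 0 < En u) by lra. pose proof (En_pos Hu t ltac:(lra)) as Ht.
  pose proof (ln_En_variation Hu) as Hln. fold L in Hln. apply Rabs_le_between in Hln.
  assert (Hsq : forall e, 1 <= e -> sqrt e <= e).
  { intros e He. rewrite <- (sqrt_square e) at 2 by lra. apply sqrt_le_1_alt. nra. }
  assert (Hbound : forall E1 E2, 0 < E1 -> 0 < E2 -> ln E1 - ln E2 <= L ->
                   sqrt E1 <= exp L * sqrt E2).
  { intros E1 E2 HE1 HE2 Hl.
    apply Rle_trans with (sqrt (exp L * E2)).
    - apply sqrt_le_1_alt. rewrite <- (exp_ln E1) at 1 by lra.
      rewrite <- (exp_ln E2) at 1 by lra. rewrite <- exp_plus. apply exp_le_mono. lra.
    - rewrite sqrt_mult by lra. apply Rmult_le_compat_r; [apply sqrt_pos | apply Hsq; lra]. }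
  split; [|apply Hbound; lra].
  apply Rmult_le_reg_l with (exp L); auto.
  rewrite <- Rmult_assoc, Rinv_r, Rmult_1_l by lra. apply Hbound; lra.
Qed.

End Energy.

Lemma pw_pos y e : 0 < pw y e.
Proof. apply exp_pos. Qed.

Lemma pw_le1 y e : 0 <= y -> e <= 0 -> pw y e <= 1.
Proof.
  intros Hy He. unfold pw, Rpower. rewrite <- exp_0 at 2. apply exp_le_mono.
  pose proof (ln_le 1 (1 + y) ltac:(lra) ltac:(lra)). rewrite ln_1 in H. nra.
Qed.

Lemma pw_mult y e1 e2 : pw y e1 * pw y e2 = pw y (e1 + e2).
Proof. unfold pw. rewrite Rpower_plus. ring. Qed.

Lemma pw_0 y : 0 <= y -> pw y 0 = 1.
Proof. intros. apply Rpower_O. lra. Qed.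

Lemma is_derive_pw y e : 0 <= y -> is_derive (fun z => pw z e) y (e / (1 + y) * pw y e).
Proof.
  intros Hy. unfold pw, Rpower. eapply is_derive_eq.
  - apply (is_derive_exp_comp (fun z => e * ln (1 + z))), is_derive_scal.
    apply (is_derive_ln_comp (fun z => 1 + z)); [|lra].
    eapply is_derive_eq; [apply (is_derive_Rplus (fun _ => 1) (fun z => z)) |].
    + apply (@is_derive_const R_AbsRing R_NormedModule).
    + apply (@is_derive_id R_AbsRing).
    + apply Rplus_0_l.
  - unfold one; simpl. field. lra.
Qed.

Lemma continuous_pw e y : 0 <= y -> continuous (fun z => pw z e) y.
Proof. intros Hy. exact (continuous_of_is_derive _ _ _ (is_derive_pw y e Hy)). Qed.

Section IntegrationByParts.
Variables (f : R -> R) (C al ga : R).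
Hypotheses (Hf : continuous_nonneg f) (Hfp : forall y, 0 <= y -> 0 <= f y) (HC : 0 <= C)
  (Hag : al < ga) (Hg : 0 < ga) (HF : forall y, 0 <= y -> RInt f 0 y <= C * pw y al).

Lemma RInt_mult_pw_bound y : 0 <= y -> RInt f 0 y * pw y (- ga) <= C * pw y (al - ga).
Proof.
  intros Hy. replace (al - ga) with (al + - ga) by ring. rewrite <- pw_mult.
  pose proof (pw_pos y (- ga)). pose proof (HF y Hy). nra.
Qed.

(* The derivative of the left-hand side minus the right-hand side at t is
   ga / (1 + t) * (RInt f 0 t * pw t (- ga) - C * pw t (al - ga)) <= 0. *)
Lemma RInt_mult_pw_parts u t : 0 < u <= t ->
  RInt (fun y => f y * pw y (- ga)) u t - RInt f 0 t * pw t (- ga) + C * ga / (ga - al) * pw t (al - ga)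
  <= - RInt f 0 u * pw u (- ga) + C * ga / (ga - al) * pw u (al - ga).
Proof.
  intros [Hu Hut]. set (K := C * ga / (ga - al)).
  set (g := fun y => f y * pw y (- ga)).
  assert (Hgc : continuous_pos g).
  { intros y Hy. apply continuousR_mult; [apply continuous_nonneg_pos | apply continuous_pw]; auto; lra. }
  replace (- RInt f 0 u * pw u (- ga) + K * pw u (al - ga))
    with (RInt g u u - RInt f 0 u * pw u (- ga) + K * pw u (al - ga))
    by (rewrite RInt_point; unfold zero; simpl; ring).
  apply (derive_nonpos_le (fun y => RInt g u y - RInt f 0 y * pw y (- ga) + K * pw y (al - ga))
           (fun y => g y - (f y * pw y (- ga) + RInt f 0 y * (- ga / (1 + y) * pw y (- ga)))
                     + K * ((al - ga) / (1 + y) * pw y (al - ga)))); auto.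
  - intros y Hy.
    apply is_derive_Rplus; [apply is_derive_Rminus|].
    + apply is_derive_RInt_R; [|apply Hgc; lra].
      apply (filter_imp (fun z => 0 < z)); [|apply locally_pos; lra].
      intros z Hz. apply ex_RInt_continuous_pos; auto.
    + apply (is_derive_Rmult (fun z => RInt f 0 z) (fun z => pw z (- ga))); [|apply is_derive_pw; lra].
      apply is_derive_RInt_R; [|apply continuous_nonneg_pos; auto; lra].
      apply (filter_imp (fun z => 0 < z)); [|apply locally_pos; lra].
      intros z Hz. apply ex_RInt_continuous_nonneg; auto; lra.
    + apply is_derive_scal, is_derive_pw. lra.
  - intros y Hy. unfold g. pose proof (RInt_mult_pw_bound y ltac:(lra)).
    replace (f y * pw y (- ga) - (f y * pw y (- ga) + RInt f 0 y * (- ga / (1 + y) * pw y (- ga)))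
             + K * ((al - ga) / (1 + y) * pw y (al - ga)))
      with (ga / (1 + y) * (RInt f 0 y * pw y (- ga) - C * pw y (al - ga)))
      by (unfold K; field; split; lra).
    assert (0 < ga / (1 + y)) by (apply Rdiv_lt_0_compat; lra). nra.
Qed.

Lemma RInt_mult_pw_le u t : 0 < u <= t ->
  RInt (fun y => f y * pw y (- ga)) u t <= C + C * ga / (ga - al).
Proof.
  intros Hut. pose proof (RInt_mult_pw_parts u t Hut).
  set (K := C * ga / (ga - al)) in *.
  assert (HK : 0 <= K) by (apply Rmult_le_pos; [nra | apply Rlt_le, Rinv_0_lt_compat; lra]).
  assert (0 <= RInt f 0 u).
  { apply RInt_ge_0; [lra | apply ex_RInt_continuous_nonneg; auto; lra | intros; apply Hfp; lra]. }
  pose proof (RInt_mult_pw_bound t ltac:(lra)).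
  pose proof (pw_pos u (- ga)). pose proof (pw_pos t (al - ga)).
  pose proof (pw_le1 u (al - ga) ltac:(lra) ltac:(lra)).
  pose proof (pw_le1 t (al - ga) ltac:(lra) ltac:(lra)).
  assert (0 <= RInt f 0 u * pw u (- ga)) by nra.
  assert (K * pw u (al - ga) <= K) by nra.
  assert (C * pw t (al - ga) <= C) by nra.
  assert (0 <= K * pw t (al - ga)) by nra.
  lra.
Qed.

End IntegrationByParts.

Lemma continuous_sqrt_sum_sq {U : UniformSpace} (f g : U -> R) w :
  continuous f w -> continuous g w -> continuous (fun w => sqrt (f w ^ 2 + g w ^ 2)) w.
Proof.
  intros Hf Hg.
  apply (continuous_comp (fun w => f w ^ 2 + g w ^ 2) sqrt); [|apply continuous_sqrt].
  assert (Hsq : forall h : U -> R, continuous h w -> continuous (fun w => h w ^ 2) w).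
  { intros h Hh. simpl.
    apply (@continuous_mult U R_AbsRing); [exact Hh|].
    apply (@continuous_mult U R_AbsRing); [exact Hh | apply continuous_const]. }
  apply (@continuous_plus U R_AbsRing R_NormedModule); apply Hsq; assumption.
Qed.

Lemma continuous_cnorm2 (w : Complex.C * Complex.C) : continuous cnorm2 w.
Proof.
  assert (HC : forall z : Complex.C, continuous Cmod z).
  { intros [z1 z2]. exact (continuous_sqrt_sum_sq fst snd _ (continuous_fst _ _) (continuous_snd _ _)). }
  destruct w as [p q].
  apply continuous_sqrt_sum_sq; apply (continuous_comp _ Cmod);
    [apply continuous_fst | apply HC | apply continuous_snd | apply HC].
Qed.

Lemma is_derive_fst (f : R -> Complex.C) t (l : Complex.C) :
  is_derive f t l -> is_derive (fun s => fst (f s)) t (fst l).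
Proof.
  intros H. eapply filterdiff_ext_lin; [apply (filterdiff_comp' f fst t _ fst H)|].
  - apply filterdiff_linear, is_linear_fst.
  - reflexivity.
Qed.

Lemma is_derive_snd (f : R -> Complex.C) t (l : Complex.C) :
  is_derive f t l -> is_derive (fun s => snd (f s)) t (snd l).
Proof.
  intros H. eapply filterdiff_ext_lin; [apply (filterdiff_comp' f snd t _ snd H)|].
  - apply filterdiff_linear, is_linear_snd.
  - reflexivity.
Qed.

Lemma cnorm2_ge0 w : 0 <= cnorm2 w.
Proof. apply sqrt_pos. Qed.

Lemma cnorm2_eq (w : Complex.C * Complex.C) :
  cnorm2 w = sqrt (fst (fst w) ^ 2 + snd (fst w) ^ 2 + fst (snd w) ^ 2 + snd (snd w) ^ 2).
Proof.
  unfold cnorm2, Cmod. rewrite !pow2_sqrt by (apply Rplus_le_le_0_compat; apply pow2_ge_0).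
  f_equal. ring.
Qed.

Lemma enorm_ge0 xi : 0 <= enorm xi.
Proof. apply sqrt_pos. Qed.

(** * The coefficient b *)

Section Solution.
Variables (M : R -> R) (T C3 ga : R) (n : nat).
Variable W : R -> list R -> Complex.C * Complex.C.
Hypotheses (HM0 : continuous_nonneg M) (HT0 : 0 < T)
  (HexM : forall t, 0 <= t -> ex_RInt_gen M (at_point t) pinf)
  (HexMM : forall t, 0 <= t -> ex_RInt_gen (Iinf M) (at_point t) pinf)
  (HexM2 : forall t, 0 <= t -> ex_RInt_gen (fun s => (Iinf M s) ^ 2) (at_point t) pinf)
  (HexA : ex_RInt_gen (fun t => Iinf (fun s => (Iinf M s) ^ 2) t) (at_point 0) pinf)
  (HT : forall t, T <= t -> Rabs (Iinf (Qk M 1) t) <= 1 /\ phi M t <= / 6 ^ 4)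
  (Hga : 0 < ga) (HC3 : forall t, 0 <= t -> Rabs (Iinf M t) <= C3 * pw t (- ga))
  (HWc : forall xi, length xi = n -> filterlim (fun t => W t xi) (at_right T) (locally (W T xi)))
  (HW1 : forall xi, length xi = n -> forall t, T < t ->
      is_derive (fun s => fst (W s xi)) t
        (Cplus (Cmult (RtoC (-2 * bfun M t)) (fst (W t xi))) (Cmult (0, enorm xi) (snd (W t xi)))))
  (HW2 : forall xi, length xi = n -> forall t, T < t ->
      is_derive (fun s => snd (W s xi)) t (Cmult (0, enorm xi) (fst (W t xi)))).

Definition Q1 t := - Iinf M t.
Definition A t := Iinf (fun s => (Iinf M s) ^ 2) t.
Definition P1 t := Iinf Q1 t.

Lemma Qk_1 : Qk M 1 = Q1.
Proof. reflexivity. Qed.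

Lemma continuous_Iinf_M : continuous_pos (Iinf M).
Proof. apply (continuous_Iinf M 1); auto using continuous_nonneg_pos; try lra. apply HexM; lra. Qed.

Lemma continuous_Q1 : continuous_pos Q1.
Proof. intros x Hx. apply continuousR_opp, continuous_Iinf_M, Hx. Qed.

Lemma continuous_Iinf_M_sq : continuous_pos (fun s => (Iinf M s) ^ 2).
Proof.
  intros x Hx. simpl. apply continuousR_mult; [|apply continuousR_mult];
    auto using continuous_Iinf_M, continuousR_const.
Qed.

Lemma continuous_A : continuous_pos A.
Proof. apply (continuous_Iinf _ 1), HexM2; auto using continuous_Iinf_M_sq; lra. Qed.

Lemma A_ge0 t : 0 <= t -> 0 <= A t.
Proof. intros Ht. apply Iinf_ge0; auto. intros; apply pow2_ge_0. Qed.

Lemma A_nonincreasing s t : 0 < s -> s <= t -> A t <= A s.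
Proof.
  intros Hs Hst. apply (Iinf_le_Iinf _ s continuous_Iinf_M_sq); auto.
  - apply HexM2; lra.
  - intros; apply pow2_ge_0.
Qed.

Lemma ex_RInt_gen_A t : 0 < t -> ex_RInt_gen A (at_point t) pinf.
Proof. intros Ht. apply (ex_RInt_gen_shift A 0 t); auto using continuous_A; lra. Qed.

Lemma Qk_2 : Qk M 2 = fun t => - A t.
Proof.
  rewrite Qk_rec by lia. apply functional_extensionality. intros t.
  unfold A. do 2 f_equal. apply functional_extensionality. intros s.
  simpl. rewrite Qk_1. unfold Q1. ring.
Qed.

Lemma P1_eq t : 0 <= t -> ex_RInt_gen Q1 (at_point t) pinf /\ P1 t = - Iinf (Iinf M) t.
Proof. intros Ht. apply Iinf_opp, HexMM, Ht. Qed.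

Lemma is_derive_P1 x : 0 < x -> is_derive P1 x (- Q1 x).
Proof. intros Hx. apply (is_derive_Iinf _ 1); auto using continuous_Q1; try lra. apply P1_eq; lra. Qed.

Lemma continuous_P1 : continuous_pos P1.
Proof. intros x Hx. exact (continuous_of_is_derive _ _ _ (is_derive_P1 x Hx)). Qed.

Lemma P1_le1 t : T <= t -> Rabs (P1 t) <= 1.
Proof. intros H. apply (HT t H). Qed.

Lemma Iinf_A_le t : T <= t -> Iinf A t <= / 1296.
Proof.
  intros H. replace (Iinf A t) with (phi M t); [replace 1296 with (6 ^ 4) by ring; apply (HT t H)|].
  unfold phi. rewrite Qk_2, (proj2 (Iinf_opp A t (ex_RInt_gen_A t ltac:(lra)))). ring.
Qed.

Lemma Iinf_Q1_sq t : 0 <= t ->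
  ex_RInt_gen (fun s => Q1 s * Q1 s) (at_point t) pinf /\ Iinf (fun s => Q1 s * Q1 s) t = A t.
Proof.
  intros Ht. replace (fun s => Q1 s * Q1 s) with (fun s => (Iinf M s) ^ 2).
  - split; [apply HexM2; auto | reflexivity].
  - apply functional_extensionality. intros s. unfold Q1. ring.
Qed.

Lemma continuous_A_sq : continuous_pos (fun s => A s * A s).
Proof. intros x Hx. apply continuousR_mult; apply continuous_A; auto. Qed.

Lemma continuous_Q1_A : continuous_pos (fun s => Rabs (Q1 s) * A s).
Proof.
  intros x Hx. apply continuousR_mult; [apply continuous_Rabs_comp, continuous_Q1 | apply continuous_A];
    auto.
Qed.

(* A <= A t on [t, oo) and \int_t^\infty A <= 6^-4 *)
Lemma Iinf_A_sq_le t : T <= t ->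
  ex_RInt_gen (fun s => A s * A s) (at_point t) pinf /\ Iinf (fun s => A s * A s) t <= A t / 1296.
Proof.
  intros Ht.
  destruct (Iinf_scal (A t) A t (ex_RInt_gen_A t ltac:(lra))) as [He Hv].
  destruct (Iinf_dominated (fun s => A s * A s) (fun s => A t * A s) t continuous_A_sq)
    as [He2 Hb]; auto; try lra.
  - intros x Hx. apply continuousR_scal, continuous_A, Hx.
  - intros x Hx. pose proof (A_nonincreasing t x ltac:(lra) Hx). pose proof (A_ge0 x ltac:(lra)).
    rewrite Rabs_pos_eq by nra. nra.
  - split; auto. pose proof (Rle_abs (Iinf (fun s => A s * A s) t)).
    pose proof (Iinf_A_le t Ht). pose proof (A_ge0 t ltac:(lra)). rewrite Hv in Hb. nra.
Qed.

(* |Q_1| A <= Q_1^2 / 72 + 18 A^2 *)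
Lemma Iinf_Q1_A_le t : T <= t ->
  ex_RInt_gen (fun s => Rabs (Q1 s) * A s) (at_point t) pinf /\
  Iinf (fun s => Rabs (Q1 s) * A s) t <= A t / 36.
Proof.
  intros Ht.
  destruct (Iinf_Q1_sq t ltac:(lra)) as [E1 V1]. destruct (Iinf_A_sq_le t Ht) as [E2 V2].
  destruct (Iinf_scal (/ 72) _ t E1) as [E3 V3].
  destruct (Iinf_scal 18 _ t E2) as [E4 V4].
  destruct (Iinf_plus _ _ t E3 E4) as [E5 V5].
  destruct (Iinf_dominated (fun s => Rabs (Q1 s) * A s)
              (fun s => / 72 * (Q1 s * Q1 s) + 18 * (A s * A s)) t continuous_Q1_A)
    as [He Hb]; auto; try lra.
  - intros x Hx. apply continuousR_plus; apply continuousR_scal;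
      [apply continuousR_mult; apply continuous_Q1 | apply continuous_A_sq]; auto.
  - intros x Hx. pose proof (A_ge0 x ltac:(lra)).
    rewrite Rabs_pos_eq by (apply Rmult_le_pos; auto; apply Rabs_pos).
    rewrite <- (Rabs_pos_eq (Q1 x * Q1 x)), Rabs_mult by apply Rle_0_sqr.
    pose proof (pow2_ge_0 (Rabs (Q1 x) - 36 * A x)). nra.
  - split; auto. pose proof (Rle_abs (Iinf (fun s => Rabs (Q1 s) * A s) t)).
    rewrite V5, V3, V4, V1 in Hb. lra.
Qed.

Definition Hmaj s := 36 * (Rabs (Q1 s) * A s) + 1296 * (A s * A s).

Lemma continuous_Hmaj : continuous_pos Hmaj.
Proof.
  intros x Hx. apply continuousR_plus; apply continuousR_scal;
    [apply continuous_Q1_A | apply continuous_A_sq]; auto.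
Qed.

Lemma Iinf_Hmaj_le t : T <= t -> ex_RInt_gen Hmaj (at_point t) pinf /\ Iinf Hmaj t <= 2 * A t.
Proof.
  intros Ht. destruct (Iinf_Q1_A_le t Ht) as [E1 V1]. destruct (Iinf_A_sq_le t Ht) as [E2 V2].
  destruct (Iinf_scal 36 _ t E1) as [E3 V3].
  destruct (Iinf_scal 1296 _ t E2) as [E4 V4].
  destruct (Iinf_plus _ _ t E3 E4) as [E5 V5].
  split; [exact E5 | unfold Hmaj; rewrite V5, V3, V4; lra].
Qed.

(* |Q_k| <= c_k |Q_1| / 36 for k = 1 and |Q_k| <= c_k A for k >= 2 *)
Definition qweight (k : nat) (s : R) : R :=
  match k with 1%nat => Rabs (Q1 s) / 36 | _ => A s end.

Lemma qweight_ge0 k s : 0 <= s -> 0 <= qweight k s.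
Proof.
  intros Hs. destruct k as [|[|k]]; simpl; auto using A_ge0.
  pose proof (Rabs_pos (Q1 s)). lra.
Qed.

Lemma qweight_mult_le j l s : 0 <= s -> (3 <= j + l)%nat ->
  qweight j s * qweight l s <= Hmaj s / 1296.
Proof.
  intros Hs Hjl. unfold Hmaj.
  pose proof (A_ge0 s Hs). pose proof (Rabs_pos (Q1 s)).
  assert (0 <= Rabs (Q1 s) * A s) by nra.
  destruct j as [|[|j]]; destruct l as [|[|l]]; simpl; try lia; nra.
Qed.

Lemma Qk_convolution_le k s : (2 <= k)%nat -> 0 <= s ->
  (forall j, (1 <= j <= k)%nat -> Rabs (Qk M j s) <= qbound j * qweight j s) ->
  Rabs (sum1 (fun j => Qk M j s * Qk M (S k - j) s) k) <= qbound (S k) / 2 * Hmaj s.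
Proof.
  intros Hk Hs HQ. eapply Rle_trans; [apply sum1_abs|]. eapply Rle_trans.
  - apply (sum1_le _ (fun j => qbound j * qbound (S k - j) * (Hmaj s / 1296))).
    intros j Hj. rewrite Rabs_mult.
    pose proof (qbound_ge0 j). pose proof (qbound_ge0 (S k - j)).
    pose proof (qweight_mult_le j (S k - j) s Hs ltac:(lia)).
    pose proof (qweight_ge0 j s Hs). pose proof (qweight_ge0 (S k - j) s Hs).
    apply Rle_trans with (qbound j * qweight j s * (qbound (S k - j) * qweight (S k - j) s)).
    + apply Rmult_le_compat; auto using Rabs_pos; apply HQ; lia.
    + replace (qbound j * qweight j s * (qbound (S k - j) * qweight (S k - j) s))
        with (qbound j * qbound (S k - j) * (qweight j s * qweight (S k - j) s)) by ring.
      apply Rmult_le_compat_l; auto using Rmult_le_pos.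
  - rewrite qbound_rec by lia. right.
    rewrite (sum1_ext _ (fun j => Hmaj s / 1296 * (qbound j * qbound (S k - j)))) by (intros; ring).
    rewrite sum1_scal. field.
Qed.

Lemma Qk_bound k : (1 <= k)%nat ->
  continuous_pos (Qk M k) /\ forall t, T <= t -> Rabs (Qk M k t) <= qbound k * qweight k t.
Proof.
  induction k as [k IH] using (well_founded_induction Wf_nat.lt_wf). intros Hk.
  destruct k as [|[|[|k]]]; try lia.
  { rewrite Qk_1, qbound_1. split; [exact continuous_Q1 | intros t Ht; simpl; lra]. }
  { rewrite Qk_2, qbound_2. split; [intros x Hx; apply continuousR_opp, continuous_A, Hx|].
    intros t Ht. simpl. rewrite Rabs_Ropp, Rabs_pos_eq by (apply A_ge0; lra).
    pose proof (A_ge0 t ltac:(lra)). lra. }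
  set (k' := S (S k)).
  set (g := fun s => sum1 (fun j => Qk M j s * Qk M (S k' - j) s) k').
  assert (Hgc : continuous_pos g).
  { intros x Hx. apply (sum1_continuous (fun j s => Qk M j s * Qk M (S k' - j) s)).
    intros j Hj. apply continuousR_mult; apply IH; auto; lia. }
  assert (Hex : forall t, T <= t ->
            ex_RInt_gen g (at_point t) pinf /\ Rabs (Iinf g t) <= qbound (S k') * A t).
  { intros t Ht. destruct (Iinf_Hmaj_le t Ht) as [EH VH].
    destruct (Iinf_scal (qbound (S k') / 2) Hmaj t EH) as [ES VS].
    destruct (Iinf_dominated g (fun s => qbound (S k') / 2 * Hmaj s) t Hgc) as [Eg Vg];
      auto; try lra.
    - intros x Hx; apply continuousR_scal, continuous_Hmaj, Hx.
    - intros s Hs. apply Qk_convolution_le; [unfold k'; lia | lra |].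
      intros j Hj. apply IH; auto; lia || lra.
    - split; auto. rewrite VS in Vg. pose proof (qbound_ge0 (S k')). nra. }
  assert (HQ : Qk M (S k') = fun t => - Iinf g t) by (apply Qk_rec; unfold k'; lia).
  rewrite HQ. split.
  - intros x Hx. apply continuousR_opp. apply (continuous_Iinf g T); auto. apply Hex; lra.
  - intros t Ht. rewrite Rabs_Ropp. apply Hex, Ht.
Qed.

Lemma bfun_minus_Q1 t : T <= t -> Rabs (bfun M t - Q1 t) <= 3 * A t.
Proof.
  intros Ht. apply Series_minus_first_le. intros N.
  eapply Rle_trans; [apply (sum1_le _ (fun m => A t * qbound (S m)))|].
  - intros [|m] Hm; [lia|]. rewrite Rmult_comm. apply Qk_bound; auto; lia.
  - rewrite sum1_scal. pose proof (sum1_qbound_le (S N)) as HS.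
    rewrite sum1_shift, qbound_1 in HS. pose proof (A_ge0 t ltac:(lra)). nra.
Qed.

Definition hrate (x y : R) := 24 * A y + 4 * (Rabs (P1 y) * Rabs (Q1 y)) + 4 * x * Rabs (P1 y).

Lemma continuous_hrate x : continuous_pos (hrate x).
Proof.
  intros y Hy. unfold hrate.
  assert (HP : continuous (fun y => Rabs (P1 y)) y) by apply continuous_Rabs_comp, continuous_P1, Hy.
  apply continuousR_plus; [apply continuousR_plus|]; apply continuousR_scal;
    [apply continuous_A, Hy | | exact HP].
  apply continuousR_mult; [exact HP | apply continuous_Rabs_comp, continuous_Q1, Hy].
Qed.

Lemma Q1_le t : T <= t -> Rabs (Q1 t) <= Rabs C3.
Proof.
  intros Ht. unfold Q1. rewrite Rabs_Ropp. eapply Rle_trans; [apply HC3; lra|].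
  pose proof (pw_le1 t (- ga) ltac:(lra) ltac:(lra)). pose proof (pw_pos t (- ga)).
  pose proof (Rle_abs C3). pose proof (Rabs_pos C3). destruct (Rle_dec 0 C3); nra.
Qed.

Lemma Rabs_bfun_le y : T <= y -> Rabs (bfun M y) <= Rabs (Q1 y) + 3 * A y.
Proof.
  intros Hy. replace (bfun M y) with (Q1 y + (bfun M y - Q1 y)) by ring.
  eapply Rle_trans; [apply Rabs_triang|]. pose proof (bfun_minus_Q1 y Hy). lra.
Qed.

Lemma hrate_ge x y : 0 <= x -> T <= y ->
  4 * Rabs (bfun M y - Q1 y) + 4 * Rabs (P1 y) * (Rabs (bfun M y) + x) <= hrate x y.
Proof.
  intros Hx Hy. unfold hrate.
  pose proof (bfun_minus_Q1 y Hy). pose proof (Rabs_bfun_le y Hy).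
  pose proof (P1_le1 y Hy). pose proof (Rabs_pos (P1 y)). pose proof (A_ge0 y ltac:(lra)).
  nra.
Qed.

Lemma W_energy_ratio xi u t Kh : length xi = n -> T < u <= t ->
  RInt (hrate (enorm xi)) u t <= Kh ->
  / exp (Kh + 8) * cnorm2 (W u xi) <= cnorm2 (W t xi) /\
  cnorm2 (W t xi) <= exp (Kh + 8) * cnorm2 (W u xi).
Proof.
  intros Hlen [Hu Hut] HK.
  pose proof (enorm_ge0 xi) as Hx. set (x := enorm xi) in *.
  set (a := fun y => fst (fst (W y xi))). set (b := fun y => snd (fst (W y xi))).
  set (c := fun y => fst (snd (W y xi))). set (d := fun y => snd (snd (W y xi))).
  destruct (sqrt_En_ratio a b c d (bfun M) Q1 P1 (hrate x) x u t (Rabs C3 + 3 * A T) T)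
    as [Hlo Hhi]; try lra.
  - intros y Hy. eapply is_derive_eq.
    + apply (is_derive_fst (fun s => fst (W s xi))), HW1; auto; lra.
    + unfold a, d, x. simpl. ring.
  - intros y Hy. eapply is_derive_eq.
    + apply (is_derive_snd (fun s => fst (W s xi))), HW1; auto; lra.
    + unfold b, c, x. simpl. ring.
  - intros y Hy. eapply is_derive_eq.
    + apply (is_derive_fst (fun s => snd (W s xi))), HW2; auto; lra.
    + unfold b, c, x. simpl. ring.
  - intros y Hy. eapply is_derive_eq.
    + apply (is_derive_snd (fun s => snd (W s xi))), HW2; auto; lra.
    + unfold a, d, x. simpl. ring.
  - intros y Hy. apply is_derive_P1. lra.
  - intros y Hy. apply P1_le1. lra.
  - intros y Hy. apply continuous_hrate. lra.
  - intros y Hy. apply hrate_ge; lra.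
  - intros y Hy. pose proof (Rabs_bfun_le y ltac:(lra)). pose proof (Q1_le y ltac:(lra)).
    pose proof (A_nonincreasing T y HT0 ltac:(lra)). lra.
  - assert (Hcn : forall y, cnorm2 (W y xi) = sqrt (En a b c d y)) by (intros y; apply cnorm2_eq).
    rewrite !Hcn. pose proof (sqrt_pos (En a b c d u)).
    assert (HE : exp (RInt (hrate x) u t + 8) <= exp (Kh + 8)) by (apply exp_le_mono; lra).
    pose proof (exp_pos (RInt (hrate x) u t + 8)).
    split; [eapply Rle_trans; [|exact Hlo] | eapply Rle_trans; [exact Hhi|]].
    + apply Rmult_le_compat_r; [lra|]. apply Rinv_le_contravar; lra.
    + apply Rmult_le_compat_r; lra.
Qed.

Lemma W_ratio xi s t Kh : length xi = n -> T <= s <= t -> 0 <= Kh ->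
  (forall u, s <= u <= t -> T < u -> RInt (hrate (enorm xi)) u t <= Kh) ->
  / exp (Kh + 8) * cnorm2 (W s xi) <= cnorm2 (W t xi) /\
  cnorm2 (W t xi) <= exp (Kh + 8) * cnorm2 (W s xi).
Proof.
  intros Hlen [Hs Hst] HK HR.
  set (E := exp (Kh + 8)).
  assert (HE : 1 <= E) by (pose proof (exp_ineq1_le (Kh + 8)); unfold E; lra).
  assert (HEinv : / E * E = 1) by (field; lra).
  pose proof (cnorm2_ge0 (W t xi)). pose proof (cnorm2_ge0 (W s xi)).
  destruct (Rle_lt_or_eq_dec T s Hs) as [HTs | <-];
    [apply W_energy_ratio; [exact Hlen | lra | apply HR; lra]|].
  destruct (Rle_lt_or_eq_dec T t Hst) as [HTt | <-].
  - (* the system is only solved on (T, oo): pass to the limit u -> T+ *)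
    assert (Hlim : filterlim (fun y => cnorm2 (W y xi)) (at_right T) (locally (cnorm2 (W T xi))))
      by (eapply filterlim_comp; [apply HWc, Hlen | apply continuous_cnorm2]).
    destruct (at_right_limit_bounds (fun y => cnorm2 (W y xi)) T t
                (/ E * cnorm2 (W t xi)) (E * cnorm2 (W t xi)) HTt Hlim) as [Hlo Hhi].
    + intros u Hu. destruct (W_energy_ratio xi u t Kh Hlen ltac:(lra) (HR u ltac:(lra) ltac:(lra)))
        as [H1 H2]. fold E in H1, H2. split.
      * apply Rmult_le_reg_l with E; [lra|]. rewrite <- Rmult_assoc, Rinv_r, Rmult_1_l by lra. exact H2.
      * apply Rmult_le_reg_l with (/ E); [apply Rinv_0_lt_compat; lra|].
        rewrite <- Rmult_assoc, HEinv, Rmult_1_l. exact H1.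
    + split.
      * apply Rmult_le_reg_l with E; [lra|]. rewrite <- Rmult_assoc, Rinv_r, Rmult_1_l by lra. exact Hhi.
      * apply Rmult_le_reg_l with (/ E); [apply Rinv_0_lt_compat; lra|].
        rewrite <- Rmult_assoc, HEinv, Rmult_1_l. exact Hlo.
  - assert (/ E <= 1) by (rewrite <- Rinv_1; apply Rinv_le_contravar; lra). split; nra.
Qed.

Lemma ex_RInt_after_T f u t : continuous_pos f -> T <= u -> T <= t -> ex_RInt f u t.
Proof. intros Hf Hu Ht. apply ex_RInt_continuous_pos; auto; lra. Qed.

Lemma RInt_hrate_eq x u t : T <= u -> T <= t ->
  RInt (hrate x) u t = 24 * RInt A u t + 4 * RInt (fun y => Rabs (P1 y) * Rabs (Q1 y)) u t
                       + 4 * x * RInt (fun y => Rabs (P1 y)) u t.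
Proof.
  intros Hu Ht.
  assert (cP : continuous_pos (fun y => Rabs (P1 y)))
    by (intros y Hy; apply continuous_Rabs_comp, continuous_P1, Hy).
  assert (cPQ : continuous_pos (fun y => Rabs (P1 y) * Rabs (Q1 y))).
  { intros y Hy. apply continuousR_mult; [apply cP, Hy | apply continuous_Rabs_comp, continuous_Q1, Hy]. }
  assert (cA : continuous_pos (fun y => 24 * A y)) by (intros y Hy; apply continuousR_scal, continuous_A, Hy).
  assert (c4PQ : continuous_pos (fun y => 4 * (Rabs (P1 y) * Rabs (Q1 y))))
    by (intros y Hy; apply continuousR_scal, cPQ, Hy).
  assert (c4P : continuous_pos (fun y => 4 * x * Rabs (P1 y)))
    by (intros y Hy; apply continuousR_scal, cP, Hy).
  assert (cAPQ : continuous_pos (fun y => 24 * A y + 4 * (Rabs (P1 y) * Rabs (Q1 y))))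
    by (intros y Hy; apply continuousR_plus; [apply cA | apply c4PQ]; exact Hy).
  pose proof continuous_A.
  unfold hrate. rewrite RInt_plus_R, RInt_plus_R, !RInt_scal_R; try apply ex_RInt_after_T; auto.
Qed.

Lemma RInt_A_le u t : T <= u <= t -> RInt A u t <= / 1296.
Proof.
  intros [Hu Hut].
  pose proof (RInt_le_Iinf A u continuous_A ltac:(lra) (ex_RInt_gen_A u ltac:(lra))
                (fun y Hy => A_ge0 y ltac:(lra)) t Hut).
  pose proof (Iinf_A_le u Hu). lra.
Qed.

Lemma Rabs_P1 y : 0 <= y -> Rabs (P1 y) = Rabs (Iinf (Iinf M) y).
Proof. intros Hy. rewrite (proj2 (P1_eq y Hy)). apply Rabs_Ropp. Qed.

Lemma continuous_nonneg_Rabs_P1 : continuous_nonneg (fun y => Rabs (Iinf (Iinf M) y)).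
Proof.
  apply continuous_nonneg_abs, continuous_nonneg_Iinf, HexMM; [|lra].
  apply continuous_nonneg_Iinf, HexM; auto; lra.
Qed.

Lemma RInt_Rabs_P1_eq u t : T <= u <= t ->
  RInt (fun y => Rabs (P1 y)) u t = RInt (fun y => Rabs (Iinf (Iinf M) y)) u t.
Proof. intros Hut. apply RInt_ext. intros y Hy. rewrite Rmin_left in Hy by lra. apply Rabs_P1. lra. Qed.

Section BoundPos.
Variables (al C : R).
Hypotheses (Hal : al < ga) (HC : 0 <= C)
  (HM1 : forall t, 0 <= t -> RInt (fun s => Rabs (Iinf (Iinf M) s)) 0 t <= C * pw t al).

(* |Q_1| <= C_3 (1+t)^(-gamma) integrated against |P_1|, whose primitive is O((1+t)^alpha) *)
Lemma RInt_P1_Q1_le_pos u t : T <= u <= t ->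
  RInt (fun y => Rabs (P1 y) * Rabs (Q1 y)) u t <= Rabs C3 * (C + C * ga / (ga - al)).
Proof.
  intros Hut. set (fP := fun y => Rabs (Iinf (Iinf M) y)).
  assert (fPc : continuous_pos fP) by apply continuous_nonneg_pos, continuous_nonneg_Rabs_P1.
  assert (Hc : continuous_pos (fun y => fP y * pw y (- ga))).
  { intros y Hy. apply continuousR_mult; [apply fPc, Hy | apply continuous_pw; lra]. }
  apply Rle_trans with (RInt (fun y => Rabs C3 * (fP y * pw y (- ga))) u t).
  - apply RInt_le; try lra; try apply ex_RInt_after_T; try lra.
    + intros y Hy. apply continuousR_mult; [apply continuous_Rabs_comp, continuous_P1, Hy|].
      apply continuous_Rabs_comp, continuous_Q1, Hy.
    + intros y Hy. apply continuousR_scal, Hc, Hy.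
    + intros y Hy. rewrite Rabs_P1 by lra. fold (fP y). unfold Q1. rewrite Rabs_Ropp.
      assert (0 <= fP y) by apply Rabs_pos.
      apply Rle_trans with (fP y * (C3 * pw y (- ga)));
        [apply Rmult_le_compat_l; [lra | apply HC3; lra]|].
      pose proof (pw_pos y (- ga)). pose proof (Rle_abs C3).
      replace (fP y * (C3 * pw y (- ga))) with (fP y * pw y (- ga) * C3) by ring.
      replace (Rabs C3 * (fP y * pw y (- ga))) with (fP y * pw y (- ga) * Rabs C3) by ring.
      apply Rmult_le_compat_l; [apply Rmult_le_pos|]; lra.
  - rewrite RInt_scal_R by (apply ex_RInt_after_T; auto; lra).
    apply Rmult_le_compat_l; [apply Rabs_pos|].
    apply (RInt_mult_pw_le fP C al ga); [apply continuous_nonneg_Rabs_P1 | intros; apply Rabs_pos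
      | exact HC | lra | lra | exact HM1 | lra].
Qed.

Lemma RInt_P1_le_pos u t : T <= u <= t -> RInt (fun y => Rabs (P1 y)) u t <= C * pw t al.
Proof.
  intros Hut. rewrite RInt_Rabs_P1_eq by lra.
  set (fP := fun y => Rabs (Iinf (Iinf M) y)).
  assert (Hex : forall a b, 0 <= a -> 0 <= b -> ex_RInt fP a b)
    by (intros; apply (ex_RInt_continuous_nonneg fP continuous_nonneg_Rabs_P1); auto).
  pose proof (HM1 t ltac:(lra)) as Ht. fold fP in Ht.
  rewrite <- (RInt_Chasles_R fP 0 u t) in Ht by (apply Hex; lra).
  assert (0 <= RInt fP 0 u) by (apply RInt_ge_0; [lra | apply Hex; lra | intros; apply Rabs_pos]).
  lra.
Qed.

End BoundPos.

Section BoundNonpos.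
Variables (al C : R).
Hypotheses (Hal : al <= 0)
  (HM1 : forall t, 0 <= t -> ex_RInt_gen (fun s => Rabs (Iinf (Iinf M) s)) (at_point t) pinf /\
     Iinf (fun s => Rabs (Iinf (Iinf M) s)) t <= C * pw t al).

Lemma M1_constant_ge0 : 0 <= C.
Proof.
  destruct (HM1 0 ltac:(lra)) as [HexP HIP].
  pose proof (Iinf_ge0 _ 0 HexP (fun y _ => Rabs_pos _)). pose proof (pw_pos 0 al). nra.
Qed.

Lemma RInt_P1_le_nonpos u t : T <= u <= t -> RInt (fun y => Rabs (P1 y)) u t <= C * pw u al.
Proof.
  intros Hut. rewrite RInt_Rabs_P1_eq by lra. destruct (HM1 u ltac:(lra)) as [HexP HIP].
  pose proof (RInt_le_Iinf _ u (continuous_nonneg_pos _ continuous_nonneg_Rabs_P1) ltac:(lra) HexP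
                (fun y _ => Rabs_pos _) t ltac:(lra)).
  lra.
Qed.

(* 2 |P_1| |Q_1| <= |P_1| + Q_1^2 since |P_1| <= 1 *)
Lemma RInt_P1_Q1_le_nonpos u t : T <= u <= t ->
  RInt (fun y => Rabs (P1 y) * Rabs (Q1 y)) u t <= / 2 * (C + A T).
Proof.
  intros Hut.
  assert (cP : continuous_pos (fun y => Rabs (P1 y)))
    by (intros y Hy; apply continuous_Rabs_comp, continuous_P1, Hy).
  assert (cQ2 : continuous_pos (fun y => Q1 y * Q1 y))
    by (intros y Hy; apply continuousR_mult; apply continuous_Q1, Hy).
  assert (IQ : RInt (fun y => Q1 y * Q1 y) u t <= A T).
  { destruct (Iinf_Q1_sq u ltac:(lra)) as [E1 V1].
    pose proof (RInt_le_Iinf _ u cQ2 ltac:(lra) E1 (fun y _ => Rle_0_sqr _) t ltac:(lra)).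
    pose proof (A_nonincreasing T u HT0 ltac:(lra)). lra. }
  pose proof (RInt_P1_le_nonpos u t Hut). pose proof (pw_le1 u al ltac:(lra) Hal).
  pose proof M1_constant_ge0.
  apply Rle_trans with (RInt (fun y => / 2 * (Rabs (P1 y) + Q1 y * Q1 y)) u t).
  - apply RInt_le; try lra; try apply ex_RInt_after_T; try lra.
    + intros y Hy. apply continuousR_mult; [apply cP, Hy | apply continuous_Rabs_comp, continuous_Q1, Hy].
    + intros y Hy. apply continuousR_scal, continuousR_plus; [apply cP | apply cQ2]; exact Hy.
    + intros y Hy. pose proof (P1_le1 y ltac:(lra)). pose proof (Rabs_pos (P1 y)).
      rewrite <- (Rabs_pos_eq (Q1 y * Q1 y)), Rabs_mult by apply Rle_0_sqr.
      pose proof (pow2_ge_0 (Rabs (P1 y) - Rabs (Q1 y))). nra.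
  - rewrite RInt_scal_R, RInt_plus_R; try apply ex_RInt_after_T; auto; try lra.
    + assert (C * pw u al <= C) by nra. lra.
    + intros y Hy. apply continuousR_plus; [apply cP | apply cQ2]; exact Hy.
Qed.

End BoundNonpos.

Lemma RInt_hrate_bound_pos al C1 N : 0 < al -> al < ga -> 0 < N ->
  (forall t, 0 <= t -> RInt (fun s => Rabs (Iinf (Iinf M) s)) 0 t <= C1 * pw t al) ->
  exists Kh, 0 <= Kh /\ forall x u t, 0 <= x -> T <= u <= t -> pw t al * x <= N ->
    RInt (hrate x) u t <= Kh.
Proof.
  intros Hal Halg HN HC1. set (C := Rabs C1).
  assert (HM1 : forall t, 0 <= t -> RInt (fun s => Rabs (Iinf (Iinf M) s)) 0 t <= C * pw t al).
  { intros t Ht. eapply Rle_trans; [apply HC1, Ht|].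
    apply Rmult_le_compat_r; [left; apply pw_pos | apply Rle_abs]. }
  assert (HC : 0 <= C) by apply Rabs_pos.
  set (K1 := C + C * ga / (ga - al)).
  assert (HK1 : 0 <= K1).
  { enough (0 <= C * ga / (ga - al)) by (unfold K1; lra).
    apply Rmult_le_pos; [nra | apply Rlt_le, Rinv_0_lt_compat; lra]. }
  exists (24 / 1296 + 4 * (Rabs C3 * K1) + 4 * (C * N)). split.
  { pose proof (Rmult_le_pos _ _ (Rabs_pos C3) HK1). nra. }
  intros x u t Hx Hut Hz. rewrite RInt_hrate_eq by lra.
  pose proof (RInt_A_le u t Hut).
  pose proof (RInt_P1_Q1_le_pos al C Halg HC HM1 u t Hut).
  pose proof (RInt_P1_le_pos al C HM1 u t Hut).
  assert (x * RInt (fun y => Rabs (P1 y)) u t <= C * N).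
  { apply Rle_trans with (x * (C * pw t al)); [apply Rmult_le_compat_l; lra|].
    replace (x * (C * pw t al)) with (C * (pw t al * x)) by ring.
    apply Rmult_le_compat_l; lra. }
  unfold K1. lra.
Qed.

Lemma RInt_hrate_bound_nonpos al C N : al <= 0 -> 0 < N ->
  (forall t, 0 <= t -> ex_RInt_gen (fun s => Rabs (Iinf (Iinf M) s)) (at_point t) pinf /\
     Iinf (fun s => Rabs (Iinf (Iinf M) s)) t <= C * pw t al) ->
  exists Kh, 0 <= Kh /\ forall x u t, 0 <= x -> T <= u <= t -> x * pw u al <= N ->
    RInt (hrate x) u t <= Kh.
Proof.
  intros Hal HN HM1.
  pose proof (M1_constant_ge0 al C HM1). pose proof (A_ge0 T ltac:(lra)).
  exists (24 / 1296 + 4 * (/ 2 * (C + A T)) + 4 * (C * N)). split; [nra|].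
  intros x u t Hx Hut Hz. rewrite RInt_hrate_eq by lra.
  pose proof (RInt_A_le u t Hut).
  pose proof (RInt_P1_Q1_le_nonpos al C Hal HM1 u t Hut).
  pose proof (RInt_P1_le_nonpos al C HM1 u t Hut).
  assert (x * RInt (fun y => Rabs (P1 y)) u t <= C * N).
  { apply Rle_trans with (x * (C * pw u al)); [apply Rmult_le_compat_l; lra|].
    replace (x * (C * pw u al)) with (C * (x * pw u al)) by ring.
    apply Rmult_le_compat_l; lra. }
  lra.
Qed.

End Solution.

(** * The zone Z_Psi *)

Lemma exp_le_iff_le_ln a z : 0 < z -> exp a <= z <-> a <= ln z.
Proof.
  intros Hz. split; intros H.
  - rewrite <- (ln_exp a). apply ln_le; auto using exp_pos.
  - rewrite <- (exp_ln z) by exact Hz. apply exp_le_mono, H.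
Qed.

Lemma mult_pw_le_iff al x N y : al < 0 -> 0 < x -> 0 < N -> 0 <= y ->
  x * pw y al <= N <-> Rpower (N / x) (1 / al) <= 1 + y.
Proof.
  intros Hal Hx HN Hy. unfold pw, Rpower.
  rewrite exp_le_iff_le_ln by lra.
  assert (HNx : 0 < N / x) by (apply Rdiv_lt_0_compat; lra).
  transitivity (exp (al * ln (1 + y)) <= N / x).
  { split; intros H.
    - apply Rmult_le_reg_l with x; auto. replace (x * (N / x)) with N by (field; lra). exact H.
    - replace N with (x * (N / x)) by (field; lra). apply Rmult_le_compat_l; lra. }
  rewrite exp_le_iff_le_ln by exact HNx.
  split; intros H.
  - replace (ln (1 + y)) with (1 / al * (al * ln (1 + y))) by (field; lra).
    apply Rmult_le_compat_neg_l; [unfold Rdiv; rewrite Rmult_1_l; left; apply Rinv_lt_0_compat|]; lra.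
  - replace (ln (N / x)) with (al * (1 / al * ln (N / x))) by (field; lra).
    apply Rmult_le_compat_neg_l; lra.
Qed.

Lemma t_xi_zone T N al t xi : al <= 0 -> 0 < T -> 0 < N -> 0 < enorm xi -> T <= t ->
  pw t al * enorm xi <= N ->
  T <= t_xi T N al xi <= t /\ forall u, t_xi T N al xi <= u -> enorm xi * pw u al <= N.
Proof.
  intros Hal HT HN Hx Ht Hz. unfold t_xi. destruct (Req_EM_T al 0) as [->|Hne].
  - rewrite pw_0 in Hz by lra. split; [lra|]. intros u Hu. rewrite pw_0; lra.
  - assert (Hiff := fun y => mult_pw_le_iff al (enorm xi) N y ltac:(lra) Hx HN).
    pose proof (proj1 (Hiff t ltac:(lra)) ltac:(lra)).
    pose proof (Rmax_l T (Rpower (N / enorm xi) (1 / al) - 1)).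
    pose proof (Rmax_r T (Rpower (N / enorm xi) (1 / al) - 1)).
    split; [split; [lra | apply Rmax_lub; lra]|].
    intros u Hu. apply Hiff; lra.
Qed.

Theorem proposition2
  (M : R -> R) (alpha beta gamma : R) (T N : R) (n : nat)
  (W : R -> list R -> Coquelicot.Complex.C * Coquelicot.Complex.C)
  (* M continuous on [0, oo) *)
  (HMc : forall t, 0 <= t ->
     filterlim M (within (fun x => 0 <= x) (locally t)) (locally (M t)))
  (* parameter constraints *)
  (Ha1 : alpha <= 1) (Hb1 : beta < 1) (Hg0 : 0 < gamma)
  (Habg : (alpha <> 0 -> gamma >= beta /\ beta >= (alpha + 1) / 2) /\
          (alpha = 0 -> gamma >= beta /\ beta > 1 / 2))
  (* the improper integrals int_t^oo M and int_s^oo int_sig^oo M exist *)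
  (HexM : forall t, 0 <= t -> ex_RInt_gen M (at_point t) pinf)
  (HexMM : forall s, 0 <= s -> ex_RInt_gen (Iinf M) (at_point s) pinf)
  (* (M1) *)
  (HM1a : 0 <= alpha -> exists C, forall t, 0 <= t ->
      RInt (fun s => Rabs (Iinf (Iinf M) s)) 0 t <= C * pw t alpha)
  (HM1b : alpha <= 0 -> exists C, forall t, 0 <= t ->
      ex_RInt_gen (fun s => Rabs (Iinf (Iinf M) s)) (at_point t) pinf /\
      Iinf (fun s => Rabs (Iinf (Iinf M) s)) t <= C * pw t alpha)
  (* (M2) *)
  (HM2 : exists C, forall t, 0 <= t -> Rabs (M t) <= C * pw t (-2 * beta))
  (* (M3) *)
  (HM3a : exists C, forall t, 0 <= t -> Rabs (Iinf M t) <= C * pw t (- gamma))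
  (HM3b : exists C, forall t, 0 <= t ->
      ex_RInt_gen (fun s => (Iinf M s) ^ 2) (at_point t) pinf /\
      Iinf (fun s => (Iinf M s) ^ 2) t <= C * pw t (- gamma))
  (HM3c : ex_RInt_gen (fun t => Iinf (fun s => (Iinf M s) ^ 2) t) (at_point 0) pinf)
  (* sup_t (1+t)^alpha int_t^oo int_s^oo (int_sig^oo M)^2 < oo *)
  (HM4 : exists C, forall t, 0 <= t ->
      ex_RInt_gen (fun s => Iinf (fun sg => (Iinf M sg) ^ 2) s) (at_point t) pinf /\
      pw t alpha * Iinf (fun s => Iinf (fun sg => (Iinf M sg) ^ 2) s) t <= C)
  (* choice of T *)
  (HT0 : 0 < T)
  (HT : forall t, T <= t -> Rabs (Iinf (Qk M 1) t) <= 1 /\ phi M t <= / 6 ^ 4)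
  (HN : 0 < N)
  (* for every xi in R^n, t |-> W t xi solves the system on [T, oo) *)
  (HWc : forall xi, length xi = n ->
      filterlim (fun t => W t xi) (at_right T) (locally (W T xi)))
  (HW1 : forall xi, length xi = n -> forall t, T < t ->
      is_derive (fun s => fst (W s xi)) t
        (Cplus (Cmult (RtoC (-2 * bfun M t)) (fst (W t xi)))
               (Cmult (0, enorm xi) (snd (W t xi)))))
  (HW2 : forall xi, length xi = n -> forall t, T < t ->
      is_derive (fun s => snd (W s xi)) t
        (Cmult (0, enorm xi) (fst (W t xi)))) :
  exists K2, 0 < K2 /\
    forall xi, length xi = n -> enorm xi <> 0 ->
    forall t, T <= t -> pw t alpha * enorm xi <= N ->
      (0 < alpha ->
         / K2 * cnorm2 (W T xi) <= cnorm2 (W t xi) /\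
         cnorm2 (W t xi) <= K2 * cnorm2 (W T xi)) /\
      (alpha <= 0 ->
         / K2 * cnorm2 (W (t_xi T N alpha xi) xi) <= cnorm2 (W t xi) /\
         cnorm2 (W t xi) <= K2 * cnorm2 (W (t_xi T N alpha xi) xi)).
Proof.
  pose proof (continuous_nonneg_of_within M HMc) as HM0.
  assert (HexM2 : forall t, 0 <= t -> ex_RInt_gen (fun s => (Iinf M s) ^ 2) (at_point t) pinf)
    by (destruct HM3b as [C HC]; intros t Ht; apply HC, Ht).
  destruct HM3a as [C3 HC3].
  pose proof (W_ratio M T C3 gamma n W HM0 HT0 HexM HexMM HexM2 HM3c HT Hg0 HC3 HWc HW1 HW2)
    as Hratio.
  destruct (Rlt_le_dec 0 alpha) as [Hpos | Hneg].
  - destruct (HM1a (Rlt_le _ _ Hpos)) as [C1 HC1].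
    assert (Hag : alpha < gamma) by (destruct (proj1 Habg ltac:(lra)); lra).
    destruct (RInt_hrate_bound_pos M T C3 gamma HM0 HT0 HexM HexMM HexM2 HM3c HT Hg0 HC3
                alpha C1 N Hpos Hag HN HC1) as [Kh [HKh HB]].
    exists (exp (Kh + 8)). split; [apply exp_pos|].
    intros xi Hlen Hne t Ht Hz. split; [intros _ | lra].
    apply Hratio; auto; [lra|]. intros u Hu HTu. apply HB; [apply enorm_ge0 | lra | exact Hz].
  - destruct (HM1b Hneg) as [C1 HC1].
    destruct (RInt_hrate_bound_nonpos M T HM0 HT0 HexM HexMM HexM2 HM3c HT alpha C1 N Hneg HN HC1)
      as [Kh [HKh HB]].
    exists (exp (Kh + 8)). split; [apply exp_pos|].
    intros xi Hlen Hne t Ht Hz. split; [lra | intros _].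
    assert (Hx : 0 < enorm xi) by (pose proof (enorm_ge0 xi); lra).
    destruct (t_xi_zone T N alpha t xi Hneg HT0 HN Hx Ht Hz) as [Hs Hzone].
    apply Hratio; auto. intros u Hu HTu. apply HB; [lra | lra | apply Hzone; lra].
Qed.
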